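(* Assume either $\mathbb E[W^4]<\infty$ (set $\boldsymbol\delta=3$) or $W$ satisfies the power-law tail condition with $\tau\in(3,5)$ (set $\boldsymbol\delta=\tau-2$). Then there exist $\varepsilon>0$, a constant $c_1>0$ and a function $e_1(\beta,B)\ge 0$ with $\limsup_{B\searrow0}e_1(\beta,B)<\infty$ for each $\beta\in[\beta_c,\beta_c+\varepsilon]$ and $\lim_{B\searrow0}e_1(\beta_c,B)=0$, such that for all $\beta\in[\beta_c,\beta_c+\varepsilon]$ and $B\in(0,\varepsilon)$, with $z^*=z^*(\beta,B)$, \[ z^*\ge\sqrt{\mathbb E[W]\sinh(\beta)}\,B+\sinh(\beta)\,\nu\,z^*-c_1(z^* )^{\boldsymbol\delta}-B\,e_1(\beta,B). \] If $W$ satisfies the power-law tail condition with $\tau=5$, the same holds with $c_1(z^* )^{\boldsymbol\delta}$ replaced by $c_1(z^* )^3\log(1/z^* )$.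
   Context: $W\ge0$ is a random variable with $\mathbb E[W^2]<\infty$, $\mathbb E[W]>0$; $\nu=\mathbb E[W^2]/\mathbb E[W]$, $\beta_c={\rm asinh}(1/\nu)$, $\alpha(\beta)=\sqrt{\sinh(\beta)/\mathbb E[W]}$. For $B>0$, $z^*(\beta,B)$ is the unique positive solution of $z=\mathbb E[\tanh(\alpha(\beta)Wz+B)\alpha(\beta)W]$. Power-law tail condition with exponent $\tau$: constants $C_W>c_W>0$, $w_0>1$ with $c_Ww^{-(\tau-1)}\le\mathbb P(W>w)\le C_Ww^{-(\tau-1)}$ for $w>w_0$. *)

From Stdlib Require Import Reals.
Open Scope R_scope.

(* The law of the random variable W >= 0 is encoded by its quantile function
   Q : (0,1) -> [0,oo), nondecreasing: W has the law of Q(U), U ~ Uniform(0,1).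
   Every real random variable admits such a representation. *)
Definition is_quantile (Q : R -> R) : Prop :=
  (forall u v, 0 < u -> u <= v -> v < 1 -> Q u <= Q v) /\
  (forall u, 0 < u < 1 -> 0 <= Q u).

Definition partial_integrals (Q : R -> R) (g : R -> R) (x : R) : Prop :=
  exists a b (pr : Riemann_integrable (fun u => g (Q u)) a b),
    0 < a /\ a < b /\ b < 1 /\ RiemannInt pr = x.

(* For g >= 0 on [0,oo):  IsExp Q g m  <->  E[g(W)] is finite and equals m
   (improper integral over (0,1) of g o Q, as the supremum over compact
   subintervals, which by monotone convergence is the expectation). *)
Definition IsExp (Q : R -> R) (g : R -> R) (m : R) : Prop :=
  is_lub (partial_integrals Q g) m.

(* P(W > w) = p : the Lebesgue measure of {u in (0,1) | Q u <= w} (an interval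
   starting at 0, since Q is nondecreasing) is 1 - p. *)
Definition TailProb (Q : R -> R) (w p : R) : Prop :=
  is_lub (fun u => u = 0 \/ (0 < u < 1 /\ Q u <= w)) (1 - p).

Definition PowerTail (Q : R -> R) (tau : R) : Prop :=
  exists CW cW w0, CW > cW /\ cW > 0 /\ w0 > 1 /\
    forall w p, w > w0 -> TailProb Q w p ->
      cW * Rpower w (- (tau - 1)) <= p /\ p <= CW * Rpower w (- (tau - 1)).

Definition alpha (EW beta : R) : R := sqrt (sinh beta / EW).

(* z is a positive solution of z = E[tanh(alpha W z + B) alpha W]
   (i.e. z = zstar(beta,B), the unique positive solution). *)
Definition IsZstar (Q : R -> R) (EW beta B z : R) : Prop :=
  0 < z /\ IsExp Q (fun w => tanh (alpha EW beta * w * z + B) * (alpha EW beta * w)) z.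

(* The conclusion, parametrised by the error term err c1 z
   (c1 zstar^delta, or c1 zstar^3 log(1/zstar)). *)
Definition Conclusion (Q : R -> R) (EW nu betac : R) (err : R -> R -> R) : Prop :=
  exists eps, eps > 0 /\
  exists c1, c1 > 0 /\
  exists e1 : R -> R -> R,
    (forall beta B, 0 <= e1 beta B) /\
    (forall beta, betac <= beta <= betac + eps ->
       exists M d, d > 0 /\ forall B, 0 < B < d -> e1 beta B <= M) /\
    (forall r, r > 0 -> exists d, d > 0 /\
       forall B, 0 < B < d -> Rabs (e1 betac B) < r) /\
    (forall beta B z, betac <= beta <= betac + eps -> 0 < B < eps ->
       IsZstar Q EW beta B z ->
       z >= sqrt (EW * sinh beta) * B + sinh beta * nu * z - err c1 z - B * e1 beta B).

(* Since [y - tanh y <= min(y, y^3)], linearising [tanh] gives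
     [a E[W] B + a^2 E[W^2] z <= z + 8 E[a W min(a W z, (a W z)^3)] + O(B^3)],
   where [a E[W] = sqrt(E[W] sinh beta)] and [a^2 E[W^2] = sinh(beta) nu]; the
   [O(B^3)] term is [B e1] with [e1 = O(B^2)].  It remains to bound the
   correction [E[a W min(a W z, (a W z)^3)]].  With a fourth moment it is at
   most [a^4 z^3 E[W^4]].  Under the power-law tail, writing [W = Q(U)] with
   [Q u <= max(w0, A (1 - u)^(-1/(tau-1)))], one integrates [min(x^2, x^4)]
   separately where [a Q z] is above or below 1, which yields [O(z^(tau-2))]
   for [tau < 5] and [O(z^3 (1 + |log z|))] for [tau = 5].  In the last case
   [z <= 1/2] is needed; it holds near [(betac, 0)] because a solution
   [z >= 1/2] would pay a fixed positive concavity gap of [tanh] on a block of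
   quantiles. *)

From Stdlib Require Import Reals Lra Lia RList ClassicalEpsilon Classical.
From Coquelicot Require Import Coquelicot.
Open Scope R_scope.

(** * Monotone functions are Riemann integrable *)

Lemma IsStepFun_ext_open (f g : R -> R) (a b : R) :
  a <= b -> (forall x, a < x < b -> f x = g x) -> IsStepFun f a b -> IsStepFun g a b.
Proof.
  intros Hab Hfg [l [lf (Hord & H0 & H1 & H2 & H3)]].
  exists l, lf; repeat split; try assumption.
  intros i Hi x Hx.
  assert (Hin1 : List.In (pos_Rl l i) l) by (apply RList_P3; exists i; split; [reflexivity | lia]).
  assert (Hin2 : List.In (pos_Rl l (S i)) l) by (apply RList_P3; exists (S i); split; [reflexivity | lia]).
  pose proof (RList_P5 l _ Hord Hin1) as L1.
  pose proof (RList_P7 l _ Hord Hin2) as L2.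
  rewrite H0, Rmin_left in L1 by lra. rewrite H1, Rmax_right in L2 by lra.
  unfold open_interval in Hx.
  rewrite <- Hfg by lra. exact (H3 i Hi x Hx).
Qed.

Lemma RiemannInt_SF_ext_open (a b : R) (f g : StepFun a b) :
  a <= b -> (forall x, a < x < b -> f x = g x) -> RiemannInt_SF f = RiemannInt_SF g.
Proof.
  intros Hab H.
  apply Rle_antisym; apply StepFun_P37; auto; intros x Hx; rewrite H; auto; lra.
Qed.

Lemma StepFun_cons_const (a p c v : R) (f : StepFun p c) : a <= p -> p <= c ->
  { g : StepFun a c | (forall t, t <= p -> g t = v) /\ (forall t, p < t -> g t = f t) /\
                      RiemannInt_SF g = v * (p - a) + RiemannInt_SF f }.
Proof.
  intros Hap Hpc.
  set (gf := fun t => if Rle_dec t p then v else f t).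
  assert (S1 : IsStepFun gf a p).
  { apply (IsStepFun_ext_open (fct_cte v)), StepFun_P4; auto.
    intros x Hx. unfold gf, fct_cte. destruct (Rle_dec x p); lra. }
  assert (S2 : IsStepFun gf p c).
  { apply (IsStepFun_ext_open f), (pre f); auto.
    intros x Hx. unfold gf. destruct (Rle_dec x p); [lra | reflexivity]. }
  exists (mkStepFun (StepFun_P46 S1 S2)). split; [| split].
  - intros t Ht. simpl. unfold gf. destruct (Rle_dec t p); [reflexivity | lra].
  - intros t Ht. simpl. unfold gf. destruct (Rle_dec t p); [lra | reflexivity].
  - rewrite <- (StepFun_P43 S1 S2).
    rewrite (RiemannInt_SF_ext_open a p (mkStepFun S1) (mkStepFun (StepFun_P4 a p v))), StepFun_P18;
      auto; [| intros x Hx; simpl; unfold gf, fct_cte; destruct (Rle_dec x p); lra].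
    rewrite (RiemannInt_SF_ext_open p c (mkStepFun S2) f); auto.
    intros x Hx; simpl; unfold gf. destruct (Rle_dec x p); [lra | reflexivity].
Qed.

(* Upper and lower step functions on a uniform grid differ by a step function
   whose integral telescopes. *)
Lemma nondecreasing_step_approx (f : R -> R) (h : R) (Hh : 0 < h) :
  forall (k : nat) (a c : R), c = a + INR k * h ->
  (forall x y, a <= x -> x <= y -> y <= c -> f x <= f y) ->
  { phi : StepFun a c & { psi : StepFun a c |
     (forall t, a <= t <= c -> Rabs (f t - phi t) <= psi t) /\
     RiemannInt_SF psi = h * (f c - f a) } }.
Proof.
  induction k as [|k IH]; intros a c Hc Hmon.
  - simpl in Hc. replace c with a by lra.
    exists (mkStepFun (StepFun_P4 a a (f a))), (mkStepFun (StepFun_P4 a a 0)).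
    split.
    + intros t Ht. replace t with a by lra. simpl. unfold fct_cte.
      rewrite Rminus_diag, Rabs_R0. lra.
    + rewrite StepFun_P18. lra.
  - set (p := a + h).
    assert (Hc' : c = p + INR k * h) by (rewrite S_INR in Hc; unfold p; lra).
    assert (INR k * h >= 0) by (pose proof (pos_INR k); nra).
    assert (Hap : a <= p) by (unfold p; lra).
    destruct (IH p c Hc') as [phik [psik [E1 E2]]].
    { intros x y Hx Hxy Hy. apply Hmon; unfold p in *; lra. }
    destruct (StepFun_cons_const a p c (f a) phik Hap ltac:(lra)) as [phi [P1 [P2 _]]].
    destruct (StepFun_cons_const a p c (f p - f a) psik Hap ltac:(lra)) as [psi [Q1 [Q2 Q3]]].
    exists phi, psi. split.
    + intros t Ht. destruct (Rle_dec t p).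
      * rewrite P1, Q1 by auto.
        assert (f a <= f t) by (apply Hmon; lra). assert (f t <= f p) by (apply Hmon; lra).
        rewrite Rabs_right by lra. lra.
      * rewrite P2, Q2 by lra. apply E1. lra.
    + rewrite Q3, E2. unfold p. ring.
Qed.

Lemma nondecreasing_Riemann_integrable (f : R -> R) (a b : R) :
  a <= b -> (forall x y, a <= x -> x <= y -> y <= b -> f x <= f y) ->
  Riemann_integrable f a b.
Proof.
  intros Hab Hmon.
  destruct (Rle_lt_dec b a) as [Hba | Hlt].
  { replace b with a by lra. apply RiemannInt_P7. }
  intros eps. pose proof (cond_pos eps) as He.
  assert (Hf : f a <= f b) by (apply Hmon; lra).
  destruct (constructive_indefinite_description _
      (INR_unbounded ((b - a) * (f b - f a) / eps))) as [n Hn].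
  assert (HnR : 0 < INR n).
  { assert (0 <= (b - a) * (f b - f a) / eps)
      by (apply Rmult_le_pos; [nra | left; apply Rinv_0_lt_compat, He]).
    lra. }
  set (h := (b - a) / INR n).
  assert (Hh : 0 < h) by (unfold h; apply Rdiv_lt_0_compat; lra).
  destruct (nondecreasing_step_approx f h Hh n a b) as [phi [psi [E1 E2]]];
    [unfold h; field; lra | auto |].
  exists phi, psi. split.
  - intros t Ht. rewrite Rmin_left, Rmax_right in Ht by lra. auto.
  - rewrite E2. unfold h. rewrite Rabs_right by (apply Rle_ge, Rmult_le_pos; [left; auto | lra]).
    apply (Rmult_lt_reg_r (INR n / eps)); [apply Rdiv_lt_0_compat; lra |].
    replace ((b - a) / INR n * (f b - f a) * (INR n / eps))
      with ((b - a) * (f b - f a) / eps) by (field; lra).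
    replace (eps * (INR n / eps)) with (INR n) by (field; lra). lra.
Qed.

(** * Elementary bounds on [tanh] *)

Lemma exp_le_compat x y : x <= y -> exp x <= exp y.
Proof. intros [H | ->]; [left; apply exp_increasing, H | lra]. Qed.

Lemma Rpower_pos x y : 0 < Rpower x y.
Proof. apply exp_pos. Qed.

Lemma nondecreasing_of_derive (f f' : R -> R) (a b : R) :
  a <= b -> (forall c, a <= c <= b -> derivable_pt_lim f c (f' c)) ->
  (forall c, a <= c <= b -> 0 <= f' c) -> f a <= f b.
Proof.
  intros [Hab | ->] Hd Hp; [| lra].
  destruct (MVT_cor2 f f' a b Hab Hd) as [c [Hc1 Hc2]].
  pose proof (Hp c ltac:(lra)). nra.
Qed.

Lemma tanh_exp x : tanh x = 1 - 2 / (exp (2 * x) + 1).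
Proof.
  unfold tanh, sinh, cosh.
  replace (exp (2 * x)) with (exp x * exp x) by (rewrite <- exp_plus; f_equal; ring).
  rewrite exp_Ropp. pose proof (exp_pos x). field. split; nra.
Qed.

Lemma tanh_le x y : x <= y -> tanh x <= tanh y.
Proof.
  intros H. rewrite !tanh_exp.
  pose proof (exp_le_compat (2 * x) (2 * y) ltac:(lra)). pose proof (exp_pos (2 * x)).
  enough (2 / (exp (2 * y) + 1) <= 2 / (exp (2 * x) + 1)) by lra.
  apply Rmult_le_compat_l; [lra |]. apply Rinv_le_contravar; lra.
Qed.

Lemma tanh_le_1 x : tanh x <= 1.
Proof.
  rewrite tanh_exp. pose proof (exp_pos (2 * x)).
  enough (0 < 2 / (exp (2 * x) + 1)) by lra. apply Rdiv_lt_0_compat; lra.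
Qed.

Lemma tanh_0 : tanh 0 = 0.
Proof. rewrite tanh_exp, Rmult_0_r, exp_0. field. Qed.

Lemma tanh_pos x : 0 < x -> 0 < tanh x.
Proof.
  intros H. rewrite tanh_exp.
  assert (1 < exp (2 * x)) by (rewrite <- exp_0; apply exp_increasing; lra).
  enough (2 / (exp (2 * x) + 1) < 1) by lra.
  apply (Rmult_lt_reg_r (exp (2 * x) + 1)); [lra |].
  unfold Rdiv. rewrite Rmult_assoc, Rinv_l by lra. lra.
Qed.

Lemma tanh_nonneg x : 0 <= x -> 0 <= tanh x.
Proof. intros [H | <-]; [left; apply tanh_pos, H | rewrite tanh_0; lra]. Qed.

Lemma derivable_pt_lim_tanh x : derivable_pt_lim tanh x (1 - tanh x * tanh x).
Proof.
  assert (Hc : 0 < cosh x) by (unfold cosh; pose proof (exp_pos x); pose proof (exp_pos (- x)); lra).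
  assert (H := derivable_pt_lim_div sinh cosh x (cosh x) (sinh x)
    (derivable_pt_lim_sinh x) (derivable_pt_lim_cosh x) ltac:(lra)).
  replace (1 - tanh x * tanh x) with ((cosh x * cosh x - sinh x * sinh x) / (cosh x)²); [exact H |].
  assert (E : exp x * exp (- x) = 1) by (rewrite <- exp_plus, Rplus_opp_r; apply exp_0).
  assert (1 = cosh x * cosh x - sinh x * sinh x) by (unfold cosh, sinh; nra).
  unfold tanh, Rsqr. field. lra.
Qed.

Definition tanh_gap (y : R) := y - tanh y.

Lemma derivable_pt_lim_tanh_gap x : derivable_pt_lim tanh_gap x (tanh x * tanh x).
Proof.
  replace (tanh x * tanh x) with (1 - (1 - tanh x * tanh x)) by ring.
  apply derivable_pt_lim_minus; [apply derivable_pt_lim_id | apply derivable_pt_lim_tanh].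
Qed.

Lemma tanh_gap_le x y : x <= y -> tanh_gap x <= tanh_gap y.
Proof.
  intros H. apply (nondecreasing_of_derive tanh_gap (fun t => tanh t * tanh t)); auto.
  - intros; apply derivable_pt_lim_tanh_gap.
  - intros; nra.
Qed.

Lemma tanh_gap_0 : tanh_gap 0 = 0.
Proof. unfold tanh_gap; rewrite tanh_0; ring. Qed.

Lemma tanh_gap_pos y : 0 < y -> 0 < tanh_gap y.
Proof.
  intros H. rewrite <- tanh_gap_0.
  destruct (MVT_cor2 tanh_gap (fun t => tanh t * tanh t) 0 y H
              (fun c _ => derivable_pt_lim_tanh_gap c)) as [c [E Hc]].
  pose proof (tanh_pos c ltac:(lra)).
  assert (0 < tanh c * tanh c * (y - 0)) by (apply Rmult_lt_0_compat; nra). lra.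
Qed.

Lemma tanh_gap_nonneg y : 0 <= y -> 0 <= tanh_gap y.
Proof. intros; rewrite <- tanh_gap_0; apply tanh_gap_le; auto. Qed.

Lemma tanh_le_id y : 0 <= y -> tanh y <= y.
Proof. intros H; pose proof (tanh_gap_nonneg y H); unfold tanh_gap in *; lra. Qed.

Lemma tanh_gap_le_cube y : 0 <= y -> tanh_gap y <= y ^ 3.
Proof.
  intros H.
  enough (0 ^ 3 - tanh_gap 0 <= y ^ 3 - tanh_gap y) by (rewrite tanh_gap_0 in *; lra).
  apply (nondecreasing_of_derive (fun t => t ^ 3 - tanh_gap t) (fun t => 3 * t ^ 2 - tanh t * tanh t)); auto.
  - intros c _. apply derivable_pt_lim_minus; [| apply derivable_pt_lim_tanh_gap].
    replace (3 * c ^ 2) with (INR 3 * c ^ Nat.pred 3) by (simpl; ring).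
    apply derivable_pt_lim_pow.
  - intros c Hc. pose proof (tanh_nonneg c ltac:(lra)). pose proof (tanh_le_id c ltac:(lra)). nra.
Qed.

Definition min_id_cube (y : R) := Rmin y (y ^ 3).

Lemma min_id_cube_le x y : 0 <= x -> x <= y -> min_id_cube x <= min_id_cube y.
Proof.
  intros H1 H2. unfold min_id_cube. apply Rmin_glb.
  - eapply Rle_trans; [apply Rmin_l | lra].
  - eapply Rle_trans; [apply Rmin_r | apply pow_incr; auto].
Qed.

Lemma min_id_cube_nonneg y : 0 <= y -> 0 <= min_id_cube y.
Proof. intros H. apply Rmin_glb; [| apply pow_le]; auto. Qed.

Lemma tanh_gap_le_min_id_cube y : 0 <= y -> tanh_gap y <= min_id_cube y.
Proof.
  intros H. apply Rmin_glb; [| apply tanh_gap_le_cube; auto].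
  pose proof (tanh_nonneg y H). unfold tanh_gap. lra.
Qed.

Lemma min_id_cube_add x B : 0 <= x -> 0 <= B ->
  min_id_cube (x + B) <= 8 * min_id_cube x + 8 * B ^ 3.
Proof.
  intros Hx HB.
  pose proof (min_id_cube_nonneg x Hx). assert (0 <= B ^ 3) by (apply pow_le; auto).
  destruct (Rle_lt_dec B x).
  - apply Rle_trans with (min_id_cube (2 * x)); [apply min_id_cube_le; lra |].
    unfold min_id_cube, Rmin.
    destruct (Rle_dec (2 * x) ((2 * x) ^ 3)), (Rle_dec x (x ^ 3)); simpl in *; nra.
  - apply Rle_trans with ((x + B) ^ 3); [apply Rmin_r |].
    assert ((x + B) ^ 3 <= (2 * B) ^ 3) by (apply pow_incr; lra).
    simpl in *; nra.
Qed.

(* The error term of the whole analysis: E[correction a z W] bounds how far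
   E[tanh(a W z + B) a W] falls below its linearisation. *)
Definition correction (a z w : R) := a * w * min_id_cube (a * w * z).

Lemma tanh_linearisation_defect a B z w : 0 <= a -> 0 <= B -> 0 < z -> 0 <= w ->
  a * B * w + a * a * z * w ^ 2 <=
  tanh (a * w * z + B) * (a * w) + 8 * correction a z w + 8 * a * B ^ 3 * w.
Proof.
  intros Ha HB Hz Hw. unfold correction.
  set (x := a * w * z).
  assert (Hx : 0 <= x) by (unfold x; repeat apply Rmult_le_pos; lra).
  assert (Haw : 0 <= a * w) by (apply Rmult_le_pos; lra).
  pose proof (tanh_gap_le_min_id_cube (x + B) ltac:(lra)) as P1.
  pose proof (min_id_cube_add x B Hx HB) as P2.
  unfold tanh_gap in P1.
  replace (a * B * w + a * a * z * w ^ 2) with ((x + B) * (a * w)) by (unfold x; ring).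
  assert ((x + B - tanh (x + B)) * (a * w) <= (8 * min_id_cube x + 8 * B ^ 3) * (a * w))
    by (apply Rmult_le_compat_r; lra).
  nra.
Qed.

Lemma approx_le_lim X z C : 0 <= C -> (forall eta, 0 < eta -> X - C * eta <= z) -> X <= z.
Proof.
  intros HC H. apply Rnot_lt_le. intro L.
  set (eta := (X - z) / (2 * (C + 1))).
  assert (Heta : 0 < eta) by (unfold eta; apply Rdiv_lt_0_compat; lra).
  specialize (H eta Heta).
  enough (C * eta < X - z) by lra.
  apply (Rmult_lt_reg_r (2 * (C + 1))); [lra |].
  replace (C * eta * (2 * (C + 1))) with (C * (X - z)) by (unfold eta; field; lra).
  nra.
Qed.

(** * Integrals over compact subintervals of (0,1) *)

Definition integrable01 (h : R -> R) :=
  forall c d, 0 < c -> c <= d -> d < 1 -> Riemann_integrable h c d.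

Definition int01_le (h : R -> R) (M : R) : Prop :=
  forall c d (pr : Riemann_integrable h c d), 0 < c -> c < d -> d < 1 -> RiemannInt pr <= M.

Lemma RiemannInt_lincomb (f g : R -> R) (a b k l : R)
  (pr : Riemann_integrable (fun x => k * f x + l * g x) a b)
  (pf : Riemann_integrable f a b) (pg : Riemann_integrable g a b) :
  RiemannInt pr = k * RiemannInt pf + l * RiemannInt pg.
Proof.
  rewrite <- !RInt_Reals.
  apply ex_RInt_Reals_1 in pf, pg.
  rewrite (RInt_plus (V := R_CompleteNormedModule) (fun x => k * f x) (fun x => l * g x))
    by (apply (ex_RInt_scal (V := R_CompleteNormedModule)); assumption).
  rewrite !(RInt_scal (V := R_CompleteNormedModule)) by assumption. reflexivity.
Qed.

Lemma RiemannInt_scal_eq (f : R -> R) (a b k : R)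
  (pr : Riemann_integrable (fun x => k * f x) a b) (pf : Riemann_integrable f a b) :
  RiemannInt pr = k * RiemannInt pf.
Proof.
  rewrite <- !RInt_Reals. apply ex_RInt_Reals_1 in pf.
  apply (RInt_scal (V := R_CompleteNormedModule)), pf.
Qed.

Lemma RiemannInt_nonneg f a b (pr : Riemann_integrable f a b) :
  a <= b -> (forall x, a < x < b -> 0 <= f x) -> 0 <= RiemannInt pr.
Proof.
  intros Hab H.
  rewrite <- (Rmult_0_l (b - a)), <- (RiemannInt_P15 (RiemannInt_P14 a b 0)).
  apply RiemannInt_P19; auto.
Qed.

Lemma RiemannInt_le_enlarge h c c1 d1 d
  (pr1 : Riemann_integrable h c1 d1) (pr : Riemann_integrable h c d) :
  c <= c1 -> c1 <= d1 -> d1 <= d -> (forall x, c < x < d -> 0 <= h x) ->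
  RiemannInt pr1 <= RiemannInt pr.
Proof.
  intros H1 H2 H3 Hp.
  assert (Hc1 : c <= c1 <= d) by lra. assert (Hd1 : c1 <= d1 <= d) by lra.
  pose proof (RiemannInt_P22 pr Hc1) as p1.
  pose proof (RiemannInt_P23 pr Hc1) as p2.
  pose proof (RiemannInt_P23 p2 Hd1) as p3.
  rewrite <- (RiemannInt_P26 p1 p2 pr), <- (RiemannInt_P26 pr1 p3 p2).
  assert (0 <= RiemannInt p1) by (apply RiemannInt_nonneg; auto; intros; apply Hp; lra).
  assert (0 <= RiemannInt p3) by (apply RiemannInt_nonneg; auto; intros; apply Hp; lra).
  lra.
Qed.

Lemma integrable01_lincomb h1 h2 k l :
  integrable01 h1 -> integrable01 h2 -> integrable01 (fun u => k * h1 u + l * h2 u).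
Proof.
  intros I1 I2 c d Hc Hcd Hd.
  apply RiemannInt_P10; [apply Riemann_integrable_scal |]; auto.
Qed.

Lemma integrable01_scal h k : integrable01 h -> integrable01 (fun u => k * h u).
Proof. intros I c d Hc Hcd Hd. apply Riemann_integrable_scal; auto. Qed.

Lemma int01_le_lincomb h1 h2 k l M1 M2 :
  integrable01 h1 -> integrable01 h2 -> 0 <= k -> 0 <= l ->
  int01_le h1 M1 -> int01_le h2 M2 ->
  int01_le (fun u => k * h1 u + l * h2 u) (k * M1 + l * M2).
Proof.
  intros I1 I2 Hk Hl H1 H2 c d pr Hc Hcd Hd.
  pose proof (I1 c d Hc ltac:(lra) Hd) as p1. pose proof (I2 c d Hc ltac:(lra) Hd) as p2.
  rewrite (RiemannInt_lincomb _ _ _ _ _ _ pr p1 p2).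
  pose proof (H1 c d p1 Hc Hcd Hd). pose proof (H2 c d p2 Hc Hcd Hd).
  apply Rplus_le_compat; apply Rmult_le_compat_l; auto.
Qed.

Lemma int01_le_scal h k M :
  integrable01 h -> 0 <= k -> int01_le h M -> int01_le (fun u => k * h u) (k * M).
Proof.
  intros I Hk H c d pr Hc Hcd Hd.
  pose proof (I c d Hc ltac:(lra) Hd) as p.
  rewrite (RiemannInt_scal_eq _ _ _ _ pr p).
  apply Rmult_le_compat_l; auto.
Qed.

Lemma int01_le_const C : 0 <= C -> int01_le (fun _ => C) C.
Proof.
  intros HC c d pr Hc Hcd Hd. rewrite RiemannInt_const.
  assert (0 <= C * (1 - (d - c))) by (apply Rmult_le_pos; lra). lra.
Qed.

Lemma int01_le_dominated h1 h2 M :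
  integrable01 h2 -> (forall u, 0 < u < 1 -> h1 u <= h2 u) ->
  int01_le h2 M -> int01_le h1 M.
Proof.
  intros I Hle H c d pr Hc Hcd Hd.
  pose proof (I c d Hc ltac:(lra) Hd) as p.
  apply Rle_trans with (RiemannInt p); [| apply H; auto].
  apply RiemannInt_P19; [lra |]. intros; apply Hle; lra.
Qed.

Lemma int01_le_enlarge h u1 u2 M :
  integrable01 h -> (forall u, 0 < u < 1 -> 0 <= h u) -> 0 < u1 -> u1 <= u2 -> u2 < 1 ->
  (forall c d (pr : Riemann_integrable h c d), 0 < c -> c <= u1 -> u2 <= d -> d < 1 ->
     RiemannInt pr <= M) ->
  int01_le h M.
Proof.
  intros I Hp Hu1 Hu12 Hu2 H c d pr Hc Hcd Hd.
  set (c' := Rmin c u1). set (d' := Rmax d u2).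
  assert (c' <= c /\ c' <= u1) by (split; [apply Rmin_l | apply Rmin_r]).
  assert (d <= d' /\ u2 <= d') by (split; [apply RmaxLess1 | apply RmaxLess2]).
  assert (0 < c') by (unfold c'; apply Rmin_glb_lt; lra).
  assert (d' < 1) by (unfold d'; apply Rmax_lub_lt; lra).
  pose proof (I c' d' ltac:(lra) ltac:(lra) ltac:(lra)) as p.
  apply Rle_trans with (RiemannInt p).
  - apply RiemannInt_le_enlarge; try lra. intros; apply Hp; lra.
  - apply H; lra.
Qed.

(** * Expectations of nondecreasing functions of W *)

Definition nondecreasing0 (g : R -> R) := forall x y, 0 <= x -> x <= y -> g x <= g y.

Section Quantile.

Variable Q : R -> R.
Hypothesis HQ : is_quantile Q.

Lemma quantile_nonneg u : 0 < u < 1 -> 0 <= Q u.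
Proof. apply (proj2 HQ). Qed.

Lemma integrable01_comp g : nondecreasing0 g -> integrable01 (fun u => g (Q u)).
Proof.
  intros Hg c d Hc Hcd Hd. apply nondecreasing_Riemann_integrable; auto.
  intros x y Hx Hxy Hy. apply Hg; [apply quantile_nonneg; lra | apply (proj1 HQ); lra].
Qed.

Lemma integrable01_quantile : integrable01 Q.
Proof. exact (integrable01_comp (fun w => w) (fun x y _ H => H)). Qed.

Lemma IsExp_int01_le g m : IsExp Q g m -> int01_le (fun u => g (Q u)) m.
Proof. intros [H _] c d pr H1 H2 H3. apply H. exists c, d, pr. auto. Qed.

Lemma IsExp_le g m M : IsExp Q g m -> int01_le (fun u => g (Q u)) M -> m <= M.
Proof. intros [_ H] HM. apply H. intros x (c & d & pr & H1 & H2 & H3 & <-). auto. Qed.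

Lemma IsExp_approx g m : IsExp Q g m -> forall eta, 0 < eta ->
  exists c d (pr : Riemann_integrable (fun u => g (Q u)) c d),
    0 < c /\ c < d /\ d < 1 /\ m - eta < RiemannInt pr.
Proof.
  intros H eta Heta. apply NNPP. intro N.
  enough (m <= m - eta) by lra.
  apply (IsExp_le g m _ H). intros c d pr H1 H2 H3.
  apply Rnot_lt_le. intro L. apply N. exists c, d, pr. auto.
Qed.

Lemma IsExp_nonneg g m :
  nondecreasing0 g -> (forall x, 0 <= x -> 0 <= g x) -> IsExp Q g m -> 0 <= m.
Proof.
  intros Hg Hp H.
  pose proof (integrable01_comp g Hg (1/4) (3/4) ltac:(lra) ltac:(lra) ltac:(lra)) as pr.
  apply Rle_trans with (RiemannInt pr).
  - apply RiemannInt_nonneg; [lra |]. intros; apply Hp, quantile_nonneg; lra.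
  - apply (IsExp_int01_le g m H); lra.
Qed.

Lemma IsExp_lincomb f g mf mg k l :
  nondecreasing0 f -> nondecreasing0 g ->
  (forall x, 0 <= x -> 0 <= f x) -> (forall x, 0 <= x -> 0 <= g x) -> 0 <= k -> 0 <= l ->
  IsExp Q f mf -> IsExp Q g mg -> IsExp Q (fun w => k * f w + l * g w) (k * mf + l * mg).
Proof.
  intros Mf Mg Pf Pg Hk Hl Ef Eg.
  pose proof (integrable01_comp f Mf) as If. pose proof (integrable01_comp g Mg) as Ig.
  split.
  - intros x (c & d & pr & Hc & Hcd & Hd & <-).
    apply (int01_le_lincomb _ _ k l mf mg If Ig Hk Hl); auto; apply IsExp_int01_le; auto.
  - intros M HM. apply (approx_le_lim _ _ (k + l)); [lra |]. intros eta Heta.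
    destruct (IsExp_approx f mf Ef eta Heta) as (c1 & d1 & p1 & Hc1 & Hcd1 & Hd1 & E1).
    destruct (IsExp_approx g mg Eg eta Heta) as (c2 & d2 & p2 & Hc2 & Hcd2 & Hd2 & E2).
    set (c := Rmin c1 c2). set (d := Rmax d1 d2).
    assert (c <= c1 /\ c <= c2) by (split; [apply Rmin_l | apply Rmin_r]).
    assert (d1 <= d /\ d2 <= d) by (split; [apply RmaxLess1 | apply RmaxLess2]).
    assert (0 < c) by (unfold c; apply Rmin_glb_lt; auto).
    assert (d < 1) by (unfold d; apply Rmax_lub_lt; auto).
    pose proof (If c d ltac:(lra) ltac:(lra) ltac:(lra)) as qf.
    pose proof (Ig c d ltac:(lra) ltac:(lra) ltac:(lra)) as qg.
    pose proof (integrable01_lincomb _ _ k l If Ig c d ltac:(lra) ltac:(lra) ltac:(lra)) as q.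
    assert (Lf : RiemannInt p1 <= RiemannInt qf).
    { apply RiemannInt_le_enlarge; try lra. intros; apply Pf, quantile_nonneg; lra. }
    assert (Lg : RiemannInt p2 <= RiemannInt qg).
    { apply RiemannInt_le_enlarge; try lra. intros; apply Pg, quantile_nonneg; lra. }
    assert (HI : k * RiemannInt qf + l * RiemannInt qg <= M).
    { rewrite <- (RiemannInt_lincomb _ _ _ _ _ _ q qf qg). apply HM. exists c, d, q. repeat split; lra. }
    assert (k * (mf - eta) <= k * RiemannInt qf) by (apply Rmult_le_compat_l; lra).
    assert (l * (mg - eta) <= l * RiemannInt qg) by (apply Rmult_le_compat_l; lra).
    lra.
Qed.

Lemma IsExp_le_sub_block f G g1 g2 m m1 m2 k l u1 u2 :
  nondecreasing0 f -> (forall x, 0 <= x -> 0 <= f x) ->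
  nondecreasing0 G -> (forall x, 0 <= x -> 0 <= G x) ->
  nondecreasing0 g1 -> nondecreasing0 g2 -> 0 <= k -> 0 <= l ->
  (forall w, 0 <= w -> f w + G w <= k * g1 w + l * g2 w) ->
  IsExp Q f m -> IsExp Q g1 m1 -> IsExp Q g2 m2 -> 0 < u1 -> u1 < u2 -> u2 < 1 ->
  m <= k * m1 + l * m2 - (u2 - u1) * G (Q u1).
Proof.
  intros Mf Pf MG PG M1 M2 Hk Hl Hle Ef E1 E2 Hu1 Hu12 Hu2.
  pose proof (integrable01_comp f Mf) as If. pose proof (integrable01_comp G MG) as IG.
  pose proof (integrable01_comp g1 M1) as I1. pose proof (integrable01_comp g2 M2) as I2.
  apply (IsExp_le f m _ Ef), (int01_le_enlarge _ u1 u2); auto; try lra.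
  { intros; apply Pf, quantile_nonneg; lra. }
  intros c d pr Hc Hcu1 Hu2d Hd.
  pose proof (IG c d Hc ltac:(lra) Hd) as pG.
  pose proof (I1 c d Hc ltac:(lra) Hd) as p1. pose proof (I2 c d Hc ltac:(lra) Hd) as p2.
  pose proof (integrable01_lincomb _ _ 1 1 If IG c d Hc ltac:(lra) Hd) as pfG.
  pose proof (integrable01_lincomb _ _ k l I1 I2 c d Hc ltac:(lra) Hd) as pL.
  assert (Hint : 1 * RiemannInt pr + 1 * RiemannInt pG <= k * RiemannInt p1 + l * RiemannInt p2).
  { rewrite <- (RiemannInt_lincomb _ _ _ _ _ _ pfG pr pG), <- (RiemannInt_lincomb _ _ _ _ _ _ pL p1 p2).
    apply RiemannInt_P19; [lra |]. intros x Hx.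
    pose proof (Hle (Q x) (quantile_nonneg x ltac:(lra))). lra. }
  assert (HGlow : G (Q u1) * (u2 - u1) <= RiemannInt pG).
  { assert (H2 : c <= u2 <= d) by lra. assert (H1 : c <= u1 <= u2) by lra.
    pose proof (RiemannInt_P23 (RiemannInt_P22 pG H2) H1) as p12.
    apply Rle_trans with (RiemannInt p12).
    - rewrite <- (RiemannInt_const _ _ _ (Riemann_integrable_const (G (Q u1)) u1 u2)).
      apply RiemannInt_P19; [lra |]. intros x Hx.
      apply MG; [apply quantile_nonneg; lra | apply (proj1 HQ); lra].
    - apply RiemannInt_le_enlarge; try lra. intros; apply PG, quantile_nonneg; lra. }
  assert (k * RiemannInt p1 <= k * m1)
    by (apply Rmult_le_compat_l; [auto | apply (IsExp_int01_le g1 m1 E1); lra]).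
  assert (l * RiemannInt p2 <= l * m2)
    by (apply Rmult_le_compat_l; [auto | apply (IsExp_int01_le g2 m2 E2); lra]).
  lra.
Qed.

End Quantile.

(** * The fixed-point equation *)

Lemma nondecreasing0_mul f g :
  nondecreasing0 f -> nondecreasing0 g ->
  (forall x, 0 <= x -> 0 <= f x) -> (forall x, 0 <= x -> 0 <= g x) ->
  nondecreasing0 (fun w => f w * g w).
Proof.
  intros Mf Mg Pf Pg x y Hx Hxy. apply Rmult_le_compat; auto.
Qed.

Lemma nondecreasing0_linear a : 0 <= a -> nondecreasing0 (fun w => a * w).
Proof. intros Ha x y _ Hxy. apply Rmult_le_compat_l; auto. Qed.

Lemma nondecreasing0_pow n : nondecreasing0 (fun w => w ^ n).
Proof. intros x y Hx Hxy. apply pow_incr; auto. Qed.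

Section FixedPoint.

Variables (Q : R -> R) (EW EW2 a B z : R).
Hypotheses (HQ : is_quantile Q)
  (HEW : IsExp Q (fun w => w) EW) (HEW2 : IsExp Q (fun w => w ^ 2) EW2)
  (Ha : 0 <= a) (HB : 0 <= B) (Hz : 0 < z)
  (HZ : IsExp Q (fun w => tanh (a * w * z + B) * (a * w)) z).

Let scaled_nonneg w : 0 <= w -> 0 <= a * w.
Proof. intros; apply Rmult_le_pos; auto. Qed.

Let scaled_z_nonneg z0 w : 0 <= z0 -> 0 <= w -> 0 <= a * w * z0.
Proof. intros; repeat apply Rmult_le_pos; auto. Qed.

Let nondecreasing0_scaled_z z0 : 0 <= z0 -> nondecreasing0 (fun w => a * w * z0).
Proof. intros Hz0 x y Hx Hxy. apply Rmult_le_compat_r, Rmult_le_compat_l; auto. Qed.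

Lemma nondecreasing0_fixed_point_integrand : nondecreasing0 (fun w => tanh (a * w * z + B) * (a * w)).
Proof.
  apply nondecreasing0_mul; [| apply nondecreasing0_linear; auto | | auto].
  - intros x y Hx Hxy. apply tanh_le. pose proof (nondecreasing0_scaled_z z (Rlt_le _ _ Hz) x y Hx Hxy). lra.
  - intros x Hx. apply tanh_nonneg. pose proof (scaled_z_nonneg z x (Rlt_le _ _ Hz) Hx). lra.
Qed.

Lemma nondecreasing0_correction : nondecreasing0 (correction a z).
Proof.
  apply nondecreasing0_mul; [apply nondecreasing0_linear; auto | | auto |].
  - intros x y Hx Hxy. apply min_id_cube_le; [apply scaled_z_nonneg |
      apply nondecreasing0_scaled_z]; auto; lra.
  - intros x Hx. apply min_id_cube_nonneg, scaled_z_nonneg; auto; lra.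
Qed.

Lemma fixed_point_le : z <= a * EW.
Proof.
  apply (IsExp_le Q _ z _ HZ).
  apply (int01_le_dominated _ (fun u => a * Q u)).
  - apply (integrable01_comp Q HQ (fun w => a * w)), nondecreasing0_linear; auto.
  - intros u Hu. pose proof (tanh_le_1 (a * Q u * z + B)).
    pose proof (scaled_nonneg (Q u) (quantile_nonneg Q HQ u Hu)). nra.
  - apply int01_le_scal; auto.
    + apply integrable01_quantile; auto.
    + apply (IsExp_int01_le Q _ _ HEW).
Qed.

Lemma fixed_point_lower M :
  int01_le (fun u => correction a z (Q u)) M ->
  a * B * EW + a * a * z * EW2 <= z + 8 * M + 8 * a * B ^ 3 * EW.
Proof.
  intros HM.
  assert (HL : IsExp Q (fun w => (a * B) * w + (a * a * z) * w ^ 2) (a * B * EW + a * a * z * EW2)).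
  { apply IsExp_lincomb; auto.
    - intros x y _ H; exact H.
    - apply nondecreasing0_pow.
    - intros x Hx; apply pow_le, Hx.
    - apply Rmult_le_pos; auto.
    - repeat apply Rmult_le_pos; lra. }
  pose proof (integrable01_comp Q HQ _ nondecreasing0_fixed_point_integrand) as IF.
  pose proof (integrable01_comp Q HQ _ nondecreasing0_correction) as IC.
  pose proof (integrable01_quantile Q HQ) as IW.
  assert (HU := int01_le_lincomb _ _ 1 (8 * a * B ^ 3) _ _
    (integrable01_lincomb _ _ 1 8 IF IC) IW ltac:(lra)
    ltac:(apply Rmult_le_pos; [lra | apply pow_le; auto])
    (int01_le_lincomb _ _ 1 8 _ _ IF IC ltac:(lra) ltac:(lra) (IsExp_int01_le Q _ _ HZ) HM)
    (IsExp_int01_le Q _ _ HEW)).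
  enough (a * B * EW + a * a * z * EW2 <= 1 * (1 * z + 8 * M) + 8 * a * B ^ 3 * EW) by lra.
  apply (IsExp_le Q _ _ _ HL).
  eapply int01_le_dominated; [| | exact HU].
  - apply integrable01_lincomb; [apply integrable01_lincomb |]; auto.
  - intros u Hu.
    pose proof (tanh_linearisation_defect a B z (Q u) Ha HB Hz (quantile_nonneg Q HQ u Hu)). lra.
Qed.

(* Once [z >= z0], the concavity gap [tanh_gap] of the integrand is bounded
   below on the quantile block [u1, (1 + u1) / 2]. *)
Lemma fixed_point_upper z0 u1 : 0 < z0 -> z0 <= z -> 0 < u1 < 1 ->
  z <= a * a * EW2 * z + a * B * EW - (1 - u1) / 2 * (a * Q u1 * tanh_gap (a * Q u1 * z0)).
Proof.
  intros Hz0 Hzz Hu1.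
  set (G := fun w => a * w * tanh_gap (a * w * z0)).
  assert (MG : nondecreasing0 G).
  { apply nondecreasing0_mul; [apply nondecreasing0_linear; auto | | auto |].
    - intros x y Hx Hxy. apply tanh_gap_le, nondecreasing0_scaled_z; auto; lra.
    - intros x Hx. apply tanh_gap_nonneg, scaled_z_nonneg; auto; lra. }
  assert (PG : forall w, 0 <= w -> 0 <= G w).
  { intros w Hw. apply Rmult_le_pos; [apply scaled_nonneg | apply tanh_gap_nonneg, scaled_z_nonneg]; auto; lra. }
  enough (z <= a * a * z * EW2 + a * B * EW - ((u1 + 1) / 2 - u1) * G (Q u1))
    by (unfold G in *; replace ((u1 + 1) / 2 - u1) with ((1 - u1) / 2) in * by field; lra).
  apply (IsExp_le_sub_block Q HQ (fun w => tanh (a * w * z + B) * (a * w)) G (fun w => w ^ 2) (fun w => w));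
    auto; try lra.
  - apply nondecreasing0_fixed_point_integrand.
  - intros w Hw. apply Rmult_le_pos; [apply tanh_nonneg | apply scaled_nonneg; auto].
    pose proof (scaled_z_nonneg z w ltac:(lra) Hw). lra.
  - apply nondecreasing0_pow.
  - intros x y _ H; exact H.
  - repeat apply Rmult_le_pos; lra.
  - intros w Hw. unfold G.
    pose proof (scaled_nonneg w Hw).
    set (y := a * w * z + B).
    assert (Hy : a * w * z0 <= y)
      by (assert (a * w * z0 <= a * w * z) by (apply Rmult_le_compat_l; auto); unfold y; lra).
    assert (a * w * tanh_gap (a * w * z0) <= a * w * tanh_gap y)
      by (apply Rmult_le_compat_l, tanh_gap_le; auto).
    unfold tanh_gap, y in *. nra.
Qed.

End FixedPoint.

Lemma sinh_le x y : x <= y -> sinh x <= sinh y.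
Proof. intros [H | ->]; [left; apply sinh_lt, H | lra]. Qed.

Lemma sinh_pos x : 0 < x -> 0 < sinh x.
Proof.
  intros H. pose proof (sinh_lt 0 x H) as K. unfold sinh in K at 1.
  rewrite Ropp_0, exp_0 in K. lra.
Qed.

Lemma betac_pos EW EW2 : 0 < EW -> 0 < EW2 -> 0 < arcsinh (1 / (EW2 / EW)).
Proof.
  intros H1 H2. rewrite <- arcsinh_0. apply arcsinh_lt.
  apply Rdiv_lt_0_compat, Rdiv_lt_0_compat; lra.
Qed.

Lemma alpha_nonneg EW b : 0 <= alpha EW b.
Proof. apply sqrt_pos. Qed.

Lemma alpha_sq EW b : 0 < EW -> 0 <= sinh b -> alpha EW b * alpha EW b = sinh b / EW.
Proof.
  intros H1 H2. apply sqrt_sqrt, Rmult_le_pos; [lra | left; apply Rinv_0_lt_compat; lra].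
Qed.

Lemma alpha_le EW b1 b2 : 0 < EW -> b1 <= b2 -> alpha EW b1 <= alpha EW b2.
Proof.
  intros H1 H2. apply sqrt_le_1_alt, Rmult_le_compat_r;
    [left; apply Rinv_0_lt_compat; lra | apply sinh_le; auto].
Qed.

Lemma alpha_pos EW b : 0 < EW -> 0 < b -> 0 < alpha EW b.
Proof. intros H1 H2. apply sqrt_lt_R0, Rdiv_lt_0_compat; [apply sinh_pos |]; auto. Qed.

Lemma sqrt_mul_sinh EW b : 0 < EW -> 0 <= sinh b -> sqrt (EW * sinh b) = alpha EW b * EW.
Proof.
  intros H1 H2. unfold alpha.
  replace (EW * sinh b) with (EW * EW * (sinh b / EW)) by (field; lra).
  rewrite sqrt_mult_alt, sqrt_square by nra. ring.
Qed.

Lemma quadratic_small K : 0 <= K -> forall r, r > 0 -> exists d, d > 0 /\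
  forall B, 0 < B < d -> Rabs (K * B ^ 2) < r.
Proof.
  intros HK r Hr. exists (Rmin 1 (r / (K + 1))). split.
  { apply Rmin_glb_lt; [lra | apply Rdiv_lt_0_compat; lra]. }
  intros B HB.
  assert (B < 1) by (eapply Rlt_le_trans; [apply HB | apply Rmin_l]).
  assert (HBr : B < r / (K + 1)) by (eapply Rlt_le_trans; [apply HB | apply Rmin_r]).
  rewrite Rabs_right by (apply Rle_ge, Rmult_le_pos; [auto | apply pow2_ge_0]).
  assert (K * B ^ 2 <= K * B) by (apply Rmult_le_compat_l; simpl; nra).
  enough ((K + 1) * B < r) by nra.
  apply (Rmult_lt_reg_r (/ (K + 1))); [apply Rinv_0_lt_compat; lra |].
  replace ((K + 1) * B * / (K + 1)) with B by (field; lra). apply HBr.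
Qed.

(* Every case reduces to a bound [8 M <= err c1 z] on the correction term;
   the cubic remainder [8 a EW B^3] of [fixed_point_lower] becomes [B * e1]. *)
Lemma Conclusion_of_correction_bound Q (HQ : is_quantile Q) EW EW2
  (HEW : IsExp Q (fun w => w) EW) (HEW2 : IsExp Q (fun w => w ^ 2) EW2)
  (HEWpos : 0 < EW) (HEW2pos : 0 < EW2) (err : R -> R -> R) (eps c1 : R) :
  let nu := EW2 / EW in
  let betac := arcsinh (1 / nu) in
  eps > 0 -> c1 > 0 ->
  (forall beta B z, betac <= beta <= betac + eps -> 0 < B < eps -> IsZstar Q EW beta B z ->
     exists M, 8 * M <= err c1 z /\ int01_le (fun u => correction (alpha EW beta) z (Q u)) M) ->
  Conclusion Q EW nu betac err.
Proof.
  intros nu betac Heps Hc1 Hcorr.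
  pose proof (betac_pos EW EW2 HEWpos HEW2pos) as Hbc.
  exists eps; split; auto. exists c1; split; auto.
  exists (fun beta B => 8 * alpha EW beta * EW * B ^ 2).
  assert (HK : forall beta, 0 <= 8 * alpha EW beta * EW)
    by (intros; pose proof (alpha_nonneg EW beta); apply Rmult_le_pos; lra).
  split; [| split; [| split]].
  - intros beta B. apply Rmult_le_pos; [apply HK | apply pow2_ge_0].
  - intros beta Hb. destruct (quadratic_small _ (HK beta) 1 ltac:(lra)) as [d [Hd HB]].
    exists 1, d. split; auto. intros B HB'. specialize (HB B HB').
    apply Rabs_def2 in HB. lra.
  - apply quadratic_small, HK.
  - intros beta B z Hb HBe Hz.
    destruct (Hcorr beta B z Hb HBe Hz) as [M [HM1 HM2]].
    destruct Hz as [Hz HZ].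
    assert (Hs : 0 < sinh beta) by (apply sinh_pos; unfold betac, nu in *; lra).
    pose proof (fixed_point_lower Q EW EW2 (alpha EW beta) B z HQ HEW HEW2
                  (alpha_nonneg EW beta) ltac:(lra) Hz HZ M HM2) as K.
    rewrite alpha_sq in K by lra.
    rewrite sqrt_mul_sinh by lra.
    replace (sinh beta / EW * z * EW2) with (sinh beta * nu * z) in K by (unfold nu; field; lra).
    lra.
Qed.

Lemma quantile_pos_somewhere Q EW :
  IsExp Q (fun w => w) EW -> 0 < EW -> exists u1, 0 < u1 < 1 /\ 0 < Q u1.
Proof.
  intros HEW Hpos.
  destruct (IsExp_approx Q _ EW HEW EW Hpos) as (c & d & pr & Hc & Hcd & Hd & E).
  apply NNPP; intro N.
  enough (RiemannInt pr <= 0) by lra.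
  rewrite <- (Rmult_0_l (d - c)), <- (RiemannInt_P15 (RiemannInt_P14 c d 0)).
  apply RiemannInt_P19; [lra |]. intros x Hx. unfold fct_cte.
  apply Rnot_lt_le. intro L. apply N. exists x. split; [lra | auto].
Qed.

Lemma second_moment_pos Q (HQ : is_quantile Q) EW EW2 :
  IsExp Q (fun w => w) EW -> IsExp Q (fun w => w ^ 2) EW2 -> 0 < EW -> 0 < EW2.
Proof.
  intros HEW HEW2 Hpos.
  destruct (quantile_pos_somewhere Q EW HEW Hpos) as [u1 [Hu1 Hq]].
  set (u2 := (u1 + 1) / 2).
  pose proof (integrable01_comp Q HQ _ (nondecreasing0_pow 2) u1 u2
                ltac:(lra) ltac:(unfold u2; lra) ltac:(unfold u2; lra)) as pr.
  apply Rlt_le_trans with (RiemannInt pr); [| apply (IsExp_int01_le Q _ _ HEW2); unfold u2; lra].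
  apply Rlt_le_trans with (Q u1 ^ 2 * (u2 - u1)).
  - apply Rmult_lt_0_compat; [apply pow_lt; auto | unfold u2; lra].
  - rewrite <- (RiemannInt_const _ _ _ (Riemann_integrable_const (Q u1 ^ 2) u1 u2)).
    apply RiemannInt_P19; [unfold u2; lra |]. intros x Hx.
    apply pow_incr. split; [lra |]. apply (proj1 HQ); unfold u2 in *; lra.
Qed.

Lemma Conclusion_fourth_moment Q (HQ : is_quantile Q) EW EW2
  (HEW : IsExp Q (fun w => w) EW) (HEW2 : IsExp Q (fun w => w ^ 2) EW2) (HEWpos : 0 < EW) m4 :
  IsExp Q (fun w => w ^ 4) m4 ->
  Conclusion Q EW (EW2 / EW) (arcsinh (1 / (EW2 / EW))) (fun c1 z => c1 * Rpower z 3).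
Proof.
  intros H4.
  pose proof (second_moment_pos Q HQ EW EW2 HEW HEW2 HEWpos) as HEW2pos.
  assert (Hm4 : 0 <= m4)
    by (apply (IsExp_nonneg Q HQ _ m4 (nondecreasing0_pow 4)); auto; intros; apply pow_le; auto).
  set (amax := alpha EW (arcsinh (1 / (EW2 / EW)) + 1)).
  assert (Ham : 0 <= amax) by apply alpha_nonneg.
  assert (0 <= amax ^ 4 * m4) by (apply Rmult_le_pos; [apply pow_le |]; auto).
  apply (Conclusion_of_correction_bound Q HQ EW EW2 HEW HEW2 HEWpos HEW2pos _ 1 (8 * (amax ^ 4 * m4) + 1));
    [lra | lra |].
  intros beta B z Hb HB [Hz HZ].
  set (a := alpha EW beta).
  assert (Ha : 0 <= a) by apply alpha_nonneg.
  assert (Haa : a <= amax) by (apply alpha_le; lra).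
  assert (0 <= z ^ 3) by (apply pow_le; lra).
  exists (a ^ 4 * z ^ 3 * m4). split.
  - replace 3 with (INR 3) by (simpl; ring). rewrite Rpower_pow by auto. simpl INR.
    assert (a ^ 4 <= amax ^ 4) by (apply pow_incr; auto).
    assert (a ^ 4 * z ^ 3 <= amax ^ 4 * z ^ 3) by (apply Rmult_le_compat_r; auto).
    assert (a ^ 4 * z ^ 3 * m4 <= amax ^ 4 * z ^ 3 * m4) by (apply Rmult_le_compat_r; auto).
    nra.
  - apply (int01_le_dominated _ (fun u => (a ^ 4 * z ^ 3) * Q u ^ 4)).
    + apply integrable01_scal, (integrable01_comp Q HQ _ (nondecreasing0_pow 4)).
    + intros u Hu. unfold correction.
      pose proof (quantile_nonneg Q HQ u Hu).
      assert (0 <= a * Q u) by (apply Rmult_le_pos; auto).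
      assert (min_id_cube (a * Q u * z) <= (a * Q u * z) ^ 3) by apply Rmin_r.
      apply Rle_trans with (a * Q u * (a * Q u * z) ^ 3); [apply Rmult_le_compat_l; auto | right; ring].
    + apply int01_le_scal; [apply (integrable01_comp Q HQ _ (nondecreasing0_pow 4)) |
        apply Rmult_le_pos; apply pow_le; lra | apply (IsExp_int01_le Q _ _ H4)].
Qed.

(** * Power-law tails *)

Lemma RiemannInt_le_scal f g c d k (pr : Riemann_integrable f c d) (q : Riemann_integrable g c d) :
  c <= d -> (forall x, c < x < d -> f x <= k * g x) -> RiemannInt pr <= k * RiemannInt q.
Proof.
  intros Hcd H.
  rewrite <- (RiemannInt_scal_eq _ _ _ _ (Riemann_integrable_scal g c d k q) q).
  apply RiemannInt_P19; auto.
Qed.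

Lemma Rpower_le_neg x y p : 0 < x -> x <= y -> 0 <= p -> Rpower y (- p) <= Rpower x (- p).
Proof.
  intros Hx Hxy Hp. rewrite !Rpower_Ropp.
  apply Rinv_le_contravar; [apply Rpower_pos | apply Rle_Rpower_l; auto].
Qed.

Lemma derivable_pt_lim_one_minus u : derivable_pt_lim (fun u => 1 - u) u (-1).
Proof.
  replace (-1) with (0 - 1) by ring.
  apply derivable_pt_lim_minus; [apply derivable_pt_lim_const | apply derivable_pt_lim_id].
Qed.

Lemma derivable_pt_lim_one_minus_Rpower p u : u < 1 ->
  derivable_pt_lim (fun u => Rpower (1 - u) p) u (- (p * Rpower (1 - u) (p - 1))).
Proof.
  intros Hu.
  replace (- (p * Rpower (1 - u) (p - 1))) with (p * Rpower (1 - u) (p - 1) * -1) by ring.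
  exact (derivable_pt_lim_comp (fun u => 1 - u) (fun x => Rpower x p) u (-1) _
           (derivable_pt_lim_one_minus u) (derivable_pt_lim_power (1 - u) p ltac:(lra))).
Qed.

Lemma continuous_one_minus_Rpower p u : u < 1 -> continuous (fun u => Rpower (1 - u) p) u.
Proof.
  intros Hu. apply (ex_derive_continuous (K := R_AbsRing) (V := R_NormedModule)).
  exists (- (p * Rpower (1 - u) (p - 1))).
  apply is_derive_Reals, derivable_pt_lim_one_minus_Rpower, Hu.
Qed.

Lemma Riemann_integrable_one_minus_Rpower p c d :
  0 <= p -> c <= d -> d < 1 -> Riemann_integrable (fun u => Rpower (1 - u) (- p)) c d.
Proof.
  intros. apply nondecreasing_Riemann_integrable; auto.
  intros; apply Rpower_le_neg; lra.
Qed.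

Lemma RiemannInt_one_minus_Rpower r c d (pr : Riemann_integrable (fun u => Rpower (1 - u) (- r)) c d) :
  c <= d -> d < 1 -> r <> 1 ->
  RiemannInt pr = (Rpower (1 - c) (1 - r) - Rpower (1 - d) (1 - r)) / (1 - r).
Proof.
  intros Hcd Hd Hr.
  rewrite <- (RInt_Reals _ _ _ pr). apply is_RInt_unique.
  replace ((Rpower (1 - c) (1 - r) - Rpower (1 - d) (1 - r)) / (1 - r)) with
    (minus ((fun u => - Rpower (1 - u) (1 - r) / (1 - r)) d) ((fun u => - Rpower (1 - u) (1 - r) / (1 - r)) c))
    by (unfold minus, plus, opp; simpl; field; lra).
  apply (is_RInt_derive (V := R_CompleteNormedModule)
           (fun u => - Rpower (1 - u) (1 - r) / (1 - r)) (fun u => Rpower (1 - u) (- r)));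
    intros x Hx;
    rewrite Rmin_left, Rmax_right in Hx by lra.
  - apply is_derive_Reals.
    assert (K := derivable_pt_lim_one_minus_Rpower (1 - r) x ltac:(lra)).
    replace (1 - r - 1) with (- r) in K by ring.
    assert (K2 := derivable_pt_lim_div_scal _ _ _ (1 - r) (derivable_pt_lim_opp _ _ _ K)).
    replace (- - ((1 - r) * Rpower (1 - x) (- r)) / (1 - r)) with (Rpower (1 - x) (- r)) in K2
      by (field; lra).
    exact K2.
  - apply continuous_one_minus_Rpower. lra.
Qed.

Lemma RiemannInt_one_minus_inv c d (pr : Riemann_integrable (fun u => Rpower (1 - u) (- (1))) c d) :
  c <= d -> d < 1 -> RiemannInt pr = ln (1 - c) - ln (1 - d).
Proof.
  intros Hcd Hd.
  rewrite <- (RInt_Reals _ _ _ pr). apply is_RInt_unique.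
  replace (ln (1 - c) - ln (1 - d)) with (minus ((fun u => - ln (1 - u)) d) ((fun u => - ln (1 - u)) c))
    by (unfold minus, plus, opp; simpl; ring).
  apply (is_RInt_derive (V := R_CompleteNormedModule)
           (fun u => - ln (1 - u)) (fun u => Rpower (1 - u) (- (1)))); intros x Hx;
    rewrite Rmin_left, Rmax_right in Hx by lra.
  - apply is_derive_Reals.
    assert (H := derivable_pt_lim_opp _ _ _ (derivable_pt_lim_comp (fun u => 1 - u) ln x (-1) _
      (derivable_pt_lim_one_minus x) (derivable_pt_lim_ln (1 - x) ltac:(lra)))).
    replace (Rpower (1 - x) (- (1))) with (- (/ (1 - x) * -1)); [exact H |].
    rewrite Rpower_Ropp, Rpower_1 by lra. ring.
  - apply continuous_one_minus_Rpower. lra.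
Qed.

Definition min_sq_pow4 (x : R) := x * min_id_cube x.

Lemma min_sq_pow4_le x y : 0 <= x -> x <= y -> min_sq_pow4 x <= min_sq_pow4 y.
Proof.
  intros. apply Rmult_le_compat; auto; [apply min_id_cube_nonneg | apply min_id_cube_le]; auto.
Qed.

Lemma min_sq_pow4_nonneg x : 0 <= x -> 0 <= min_sq_pow4 x.
Proof. intros. apply Rmult_le_pos, min_id_cube_nonneg; auto. Qed.

Lemma min_sq_pow4_le_sq x : 0 <= x -> min_sq_pow4 x <= x ^ 2.
Proof.
  intros. apply Rle_trans with (x * x); [apply Rmult_le_compat_l, Rmin_l; auto | right; ring].
Qed.

Lemma min_sq_pow4_le_pow4 x : 0 <= x -> min_sq_pow4 x <= x ^ 4.
Proof.
  intros. apply Rle_trans with (x * x ^ 3); [apply Rmult_le_compat_l, Rmin_r; auto | right; ring].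
Qed.

Lemma min_sq_pow4_le_Rpower x r : 0 < x -> 2 <= r <= 4 -> min_sq_pow4 x <= Rpower x r.
Proof.
  intros Hx Hr. destruct (Rle_lt_dec x 1).
  - apply Rle_trans with (Rpower x (INR 4)).
    + rewrite Rpower_pow by auto. apply min_sq_pow4_le_pow4; lra.
    + apply exp_le_compat. assert (ln x <= 0) by (rewrite <- ln_1; apply ln_le; lra).
      simpl INR. nra.
  - apply Rle_trans with (Rpower x (INR 2)).
    + rewrite Rpower_pow by auto. apply min_sq_pow4_le_sq; lra.
    + apply exp_le_compat. assert (0 <= ln x) by (rewrite <- ln_1; apply ln_le; lra).
      simpl INR. nra.
Qed.

Lemma correction_eq a z w : z <> 0 -> correction a z w = min_sq_pow4 (a * w * z) / z.
Proof. intros. unfold correction, min_sq_pow4. field. auto. Qed.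

(* The correction term along a quantile tail [Q u ~ (1 - u)^(-g)]. *)
Definition tail_profile (s g u : R) := min_sq_pow4 (s * Rpower (1 - u) (- g)).

Lemma Riemann_integrable_tail_profile s g c d :
  0 <= s -> 0 <= g -> c <= d -> d < 1 -> Riemann_integrable (tail_profile s g) c d.
Proof.
  intros. apply nondecreasing_Riemann_integrable; auto.
  intros x y Hx Hxy Hy. apply min_sq_pow4_le.
  - apply Rmult_le_pos; [| left; apply Rpower_pos]; auto.
  - apply Rmult_le_compat_l, Rpower_le_neg; auto; lra.
Qed.

Lemma Rpower_pow_mul v a n : 0 < v -> Rpower v a ^ n = Rpower v (INR n * a).
Proof. intros. rewrite <- Rpower_pow by apply Rpower_pos. rewrite Rpower_mult. f_equal; ring. Qed.

Lemma tail_profile_le_sq s g u : 0 <= s -> u < 1 ->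
  tail_profile s g u <= s ^ 2 * Rpower (1 - u) (- (2 * g)).
Proof.
  intros Hs Hu. eapply Rle_trans;
    [apply min_sq_pow4_le_sq, Rmult_le_pos; [| left; apply Rpower_pos]; auto |].
  rewrite Rpow_mult_distr, Rpower_pow_mul by lra. simpl INR. right; f_equal; f_equal; ring.
Qed.

Lemma tail_profile_le_pow4 s g u : 0 <= s -> u < 1 ->
  tail_profile s g u <= s ^ 4 * Rpower (1 - u) (- (4 * g)).
Proof.
  intros Hs Hu. eapply Rle_trans;
    [apply min_sq_pow4_le_pow4, Rmult_le_pos; [| left; apply Rpower_pos]; auto |].
  rewrite Rpow_mult_distr, Rpower_pow_mul by lra. simpl INR. right; f_equal; f_equal; ring.
Qed.

Lemma Rpower_inv_exponent s g k : 0 < s -> 0 < g -> Rpower (Rpower s (1 / g)) (INR k * g) = s ^ k.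
Proof.
  intros Hs Hg. rewrite Rpower_mult.
  replace (1 / g * (INR k * g)) with (INR k) by (field; lra). apply Rpower_pow, Hs.
Qed.

(* With [lam = s^(1/g)], the profile is [~ x^2] on [1 - u <= lam] (where its
   argument is at least 1) and [~ x^4] below. *)
Lemma RiemannInt_tail_profile_near1 s g c d (pr : Riemann_integrable (tail_profile s g) c d) :
  0 < s -> 0 < g < 1/2 -> c <= d -> d < 1 -> 1 - c <= Rpower s (1 / g) ->
  RiemannInt pr <= Rpower s (1 / g) / (1 - 2 * g).
Proof.
  intros Hs Hg Hcd Hd Hl. set (lam := Rpower s (1 / g)) in *.
  assert (Hlam : 0 < lam) by apply Rpower_pos.
  pose proof (Riemann_integrable_one_minus_Rpower (2 * g) c d ltac:(lra) Hcd Hd) as q.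
  apply Rle_trans with (s ^ 2 * RiemannInt q).
  { apply RiemannInt_le_scal; auto. intros; apply tail_profile_le_sq; lra. }
  rewrite (RiemannInt_one_minus_Rpower (2 * g) c d q Hcd Hd ltac:(lra)).
  assert (Hlam2 : s ^ 2 * Rpower lam (1 - 2 * g) = lam).
  { unfold lam. rewrite <- (Rpower_inv_exponent s g 2), <- Rpower_plus by lra.
    replace (INR 2 * g + (1 - 2 * g)) with 1 by (simpl; ring). apply Rpower_1, Rpower_pos. }
  pose proof (Rpower_pos (1 - d) (1 - 2 * g)).
  assert (Rpower (1 - c) (1 - 2 * g) <= Rpower lam (1 - 2 * g)) by (apply Rle_Rpower_l; lra).
  assert (0 < s ^ 2) by (apply pow_lt; auto).
  unfold Rdiv. rewrite <- Rmult_assoc.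
  apply Rmult_le_compat_r; [left; apply Rinv_0_lt_compat; lra | nra].
Qed.

Lemma RiemannInt_tail_profile_away s g c d (pr : Riemann_integrable (tail_profile s g) c d) :
  0 < s -> 1/4 < g -> c <= d -> d < 1 -> Rpower s (1 / g) <= 1 - d ->
  RiemannInt pr <= Rpower s (1 / g) / (4 * g - 1).
Proof.
  intros Hs Hg Hcd Hd Hl. set (lam := Rpower s (1 / g)) in *.
  assert (Hlam : 0 < lam) by apply Rpower_pos.
  pose proof (Riemann_integrable_one_minus_Rpower (4 * g) c d ltac:(lra) Hcd Hd) as q.
  apply Rle_trans with (s ^ 4 * RiemannInt q).
  { apply RiemannInt_le_scal; auto. intros; apply tail_profile_le_pow4; lra. }
  rewrite (RiemannInt_one_minus_Rpower (4 * g) c d q Hcd Hd ltac:(lra)).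
  assert (Hlam4 : s ^ 4 * Rpower lam (- (4 * g - 1)) = lam).
  { unfold lam. rewrite <- (Rpower_inv_exponent s g 4), <- Rpower_plus by lra.
    replace (INR 4 * g + - (4 * g - 1)) with 1 by (simpl; ring). apply Rpower_1, Rpower_pos. }
  pose proof (Rpower_pos (1 - c) (- (4 * g - 1))).
  assert (Rpower (1 - d) (- (4 * g - 1)) <= Rpower lam (- (4 * g - 1))) by (apply Rpower_le_neg; lra).
  assert (0 < s ^ 4) by (apply pow_lt; auto).
  replace (1 - 4 * g) with (- (4 * g - 1)) by ring.
  replace (s ^ 4 * ((Rpower (1 - c) (- (4 * g - 1)) - Rpower (1 - d) (- (4 * g - 1))) / - (4 * g - 1)))
    with (s ^ 4 * (Rpower (1 - d) (- (4 * g - 1)) - Rpower (1 - c) (- (4 * g - 1))) / (4 * g - 1))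
    by (field; lra).
  apply Rmult_le_compat_r; [left; apply Rinv_0_lt_compat; lra | nra].
Qed.

Lemma RiemannInt_tail_profile_away_log s c d (pr : Riemann_integrable (tail_profile s (1/4)) c d) :
  0 < s -> 0 < c -> c <= d -> d < 1 -> Rpower s 4 <= 1 - d ->
  RiemannInt pr <= Rpower s 4 * (- ln (Rpower s 4)).
Proof.
  intros Hs Hc Hcd Hd Hl.
  pose proof (Riemann_integrable_one_minus_Rpower 1 c d ltac:(lra) Hcd Hd) as q.
  apply Rle_trans with (s ^ 4 * RiemannInt q).
  { apply RiemannInt_le_scal; auto. intros x Hx.
    replace (- (1)) with (- (4 * (1/4))) by field. apply tail_profile_le_pow4; lra. }
  rewrite (RiemannInt_one_minus_inv c d q Hcd Hd).
  replace (s ^ 4) with (Rpower s 4) by (rewrite <- Rpower_pow by auto; simpl INR; f_equal; ring).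
  assert (ln (1 - c) <= 0) by (rewrite <- ln_1; apply ln_le; lra).
  assert (ln (Rpower s 4) <= ln (1 - d)) by (apply ln_le; [apply Rpower_pos | auto]).
  apply Rmult_le_compat_l; [left; apply Rpower_pos | lra].
Qed.

Lemma int01_le_tail_profile_split s g LB :
  0 < s -> 0 < g < 1/2 -> 0 <= LB ->
  (forall c d (pr : Riemann_integrable (tail_profile s g) c d), 0 < c -> c <= d -> d < 1 ->
     Rpower s (1 / g) <= 1 - d -> RiemannInt pr <= Rpower s (1 / g) * LB) ->
  int01_le (tail_profile s g) (Rpower s (1 / g) * (1 / (1 - 2 * g) + LB)).
Proof.
  intros Hs Hg HLB Haway c d pr Hc Hcd Hd.
  set (lam := Rpower s (1 / g)) in *.
  assert (Hlam : 0 < lam) by apply Rpower_pos.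
  assert (0 < 1 / (1 - 2 * g)) by (apply Rdiv_lt_0_compat; lra).
  assert (0 <= lam * LB) by (apply Rmult_le_pos; lra).
  assert (E : lam / (1 - 2 * g) = lam * (1 / (1 - 2 * g))) by (field; lra).
  destruct (Rle_lt_dec (1 - c) lam).
  { pose proof (RiemannInt_tail_profile_near1 s g c d pr Hs Hg ltac:(lra) Hd r) as K.
    fold lam in K. nra. }
  destruct (Rle_lt_dec lam (1 - d)).
  { pose proof (Haway c d pr Hc ltac:(lra) Hd r0) as K. fold lam in K. nra. }
  set (us := 1 - lam).
  pose proof (Riemann_integrable_tail_profile s g c us ltac:(lra) ltac:(lra)
                ltac:(unfold us; lra) ltac:(unfold us; lra)) as p1.
  pose proof (Riemann_integrable_tail_profile s g us d ltac:(lra) ltac:(lra)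
                ltac:(unfold us; lra) ltac:(unfold us; lra)) as p2.
  rewrite <- (RiemannInt_P26 p1 p2 pr).
  pose proof (Haway c us p1 Hc ltac:(unfold us; lra) ltac:(unfold us; lra) ltac:(unfold us; lra)) as K1.
  pose proof (RiemannInt_tail_profile_near1 s g us d p2 Hs Hg ltac:(unfold us; lra) Hd
                ltac:(unfold us, lam; lra)) as K2.
  fold lam in K1, K2. nra.
Qed.

Lemma int01_le_tail_profile s g : 0 < s -> 1/4 < g < 1/2 ->
  int01_le (tail_profile s g) (Rpower s (1 / g) * (1 / (1 - 2 * g) + 1 / (4 * g - 1))).
Proof.
  intros Hs Hg. apply int01_le_tail_profile_split; auto; [lra | left; apply Rdiv_lt_0_compat; lra |].
  intros c d pr Hc Hcd Hd Hl.
  replace (Rpower s (1 / g) * (1 / (4 * g - 1))) with (Rpower s (1 / g) / (4 * g - 1)) by (field; lra).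
  apply RiemannInt_tail_profile_away; auto; lra.
Qed.

Lemma int01_le_tail_profile_log s : 0 < s ->
  int01_le (tail_profile s (1/4)) (Rpower s 4 * (2 + Rmax 0 (- ln (Rpower s 4)))).
Proof.
  intros Hs.
  pose proof (int01_le_tail_profile_split s (1/4) (Rmax 0 (- ln (Rpower s 4))) Hs ltac:(lra)
                (Rmax_l _ _)) as K.
  replace (1 / (1/4)) with 4 in K by field. replace (1 / (1 - 2 * (1/4))) with 2 in K by field.
  apply K. intros c d pr Hc Hcd Hd Hl.
  eapply Rle_trans; [apply RiemannInt_tail_profile_away_log; auto |].
  apply Rmult_le_compat_l; [left; apply Rpower_pos | apply Rmax_r].
Qed.

(* [P(W > w) <= CW w^(1-tau)] inverts to [Q u <= (CW / (1 - u))^(1/(tau-1))]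
   beyond [w0]; the level [w'] halfway to [Q u] avoids the atom at [Q u]. *)
Lemma quantile_le_of_PowerTail Q tau : is_quantile Q -> PowerTail Q tau -> 1 < tau ->
  exists w0 A0, 0 < w0 /\ 0 < A0 /\
  forall u, 0 < u < 1 -> Q u <= Rmax w0 (A0 * Rpower (1 - u) (- (1 / (tau - 1)))).
Proof.
  intros [HQ1 _] (CW & cW & w0 & HCc & HcW & Hw0 & Hb) Ht.
  set (g := 1 / (tau - 1)).
  assert (Hg : 0 < g) by (unfold g; apply Rdiv_lt_0_compat; lra).
  exists w0, (2 * Rpower CW g). split; [lra |]. split; [pose proof (Rpower_pos CW g); lra |].
  intros u Hu.
  destruct (Rle_lt_dec (Q u) w0) as [Hle | Hgt]; [eapply Rle_trans; [apply Hle | apply Rmax_l] |].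
  eapply Rle_trans; [| apply Rmax_r].
  set (w' := (w0 + Q u) / 2).
  destruct (completeness (fun v => v = 0 \/ (0 < v < 1 /\ Q v <= w'))) as [m Hm].
  { exists 1. intros v [-> | [Hv _]]; lra. }
  { exists 0. left; auto. }
  assert (Ht' : TailProb Q w' (1 - m)) by (unfold TailProb; replace (1 - (1 - m)) with m by ring; exact Hm).
  destruct (Hb w' (1 - m) ltac:(unfold w'; lra) Ht') as [_ Hup].
  assert (Hmu : m <= u).
  { apply Hm. intros v [-> | [Hv Hqv]]; [lra |].
    apply Rnot_lt_le. intro L. assert (Q u <= Q v) by (apply HQ1; lra). unfold w' in Hqv. lra. }
  assert (Hw' : 0 < w') by (unfold w'; lra).
  assert (Hp : 0 < Rpower w' (tau - 1)) by apply Rpower_pos.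
  rewrite Rpower_Ropp in Hup.
  assert (K1 : Rpower w' (tau - 1) <= CW / (1 - u)).
  { apply (Rmult_le_reg_r ((1 - u) / Rpower w' (tau - 1))); [apply Rdiv_lt_0_compat; lra |].
    replace (Rpower w' (tau - 1) * ((1 - u) / Rpower w' (tau - 1))) with (1 - u) by (field; lra).
    replace (CW / (1 - u) * ((1 - u) / Rpower w' (tau - 1))) with (CW * / Rpower w' (tau - 1))
      by (field; lra).
    lra. }
  assert (K2 : w' <= Rpower (CW / (1 - u)) g).
  { replace w' with (Rpower (Rpower w' (tau - 1)) g).
    - apply Rle_Rpower_l; [lra | split; auto].
    - rewrite Rpower_mult. replace ((tau - 1) * g) with 1 by (unfold g; field; lra).
      apply Rpower_1; auto. }
  unfold Rdiv in K2. rewrite <- Rpower_mult_distr in K2 by (try apply Rinv_0_lt_compat; lra).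
  replace (Rpower (/ (1 - u)) g) with (Rpower (1 - u) (- g)) in K2
    by (unfold Rpower; rewrite ln_Rinv by lra; f_equal; ring).
  unfold w' in K2. fold g. lra.
Qed.

Lemma quantile_tail_bound_weaken Q w0 A0 A1 g : A0 <= A1 ->
  (forall u, 0 < u < 1 -> Q u <= Rmax w0 (A0 * Rpower (1 - u) (- g))) ->
  (forall u, 0 < u < 1 -> Q u <= Rmax w0 (A1 * Rpower (1 - u) (- g))).
Proof.
  intros HA HT u Hu. eapply Rle_trans; [apply HT, Hu |].
  apply Rle_max_compat_l, Rmult_le_compat_r; [left; apply Rpower_pos | auto].
Qed.

Lemma int01_le_correction_of_tail Q (HQ : is_quantile Q) a z w0 A0 g r K :
  0 < a -> 0 < z -> 0 < w0 -> 0 < A0 -> 0 <= g -> 2 <= r <= 4 ->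
  (forall u, 0 < u < 1 -> Q u <= Rmax w0 (A0 * Rpower (1 - u) (- g))) ->
  int01_le (tail_profile (a * A0 * z) g) K ->
  int01_le (fun u => correction a z (Q u)) ((Rpower (a * w0 * z) r + K) / z).
Proof.
  intros Ha Hz Hw0 HA0 Hg Hr HT HK.
  set (C := Rpower (a * w0 * z) r).
  assert (HC : 0 < C) by apply Rpower_pos.
  assert (Itail : integrable01 (tail_profile (a * A0 * z) g)).
  { intros c d Hc Hcd Hd. apply Riemann_integrable_tail_profile; auto.
    repeat apply Rmult_le_pos; lra. }
  apply (int01_le_dominated _ (fun u => / z * (fun _ => C) u + / z * tail_profile (a * A0 * z) g u)).
  - apply integrable01_lincomb; auto. intros c d _ _ _; apply Riemann_integrable_const.
  - intros u Hu. rewrite correction_eq by lra. unfold Rdiv. rewrite Rmult_comm.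
    rewrite <- Rmult_plus_distr_l. apply Rmult_le_compat_l; [left; apply Rinv_0_lt_compat, Hz |].
    pose proof (quantile_nonneg Q HQ u Hu) as Hq.
    assert (Hx : 0 <= a * Q u * z) by (repeat apply Rmult_le_pos; lra).
    pose proof (Rpower_pos (1 - u) (- g)).
    assert (Hw0C : min_sq_pow4 (a * w0 * z) <= C)
      by (apply min_sq_pow4_le_Rpower; auto; repeat apply Rmult_lt_0_compat; auto).
    assert (Htail : 0 <= tail_profile (a * A0 * z) g u)
      by (apply min_sq_pow4_nonneg; repeat apply Rmult_le_pos; lra).
    assert (0 <= min_sq_pow4 (a * w0 * z)) by (apply min_sq_pow4_nonneg; repeat apply Rmult_le_pos; lra).
    specialize (HT u Hu). unfold Rmax in HT. destruct (Rle_dec w0 (A0 * Rpower (1 - u) (- g))).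
    + enough (min_sq_pow4 (a * Q u * z) <= tail_profile (a * A0 * z) g u) by lra.
      apply min_sq_pow4_le; auto.
      replace (a * A0 * z * Rpower (1 - u) (- g)) with (a * (A0 * Rpower (1 - u) (- g)) * z) by ring.
      apply Rmult_le_compat_r, Rmult_le_compat_l; lra.
    + enough (min_sq_pow4 (a * Q u * z) <= min_sq_pow4 (a * w0 * z)) by lra.
      apply min_sq_pow4_le; auto. apply Rmult_le_compat_r, Rmult_le_compat_l; lra.
  - replace ((C + K) / z) with (/ z * C + / z * K) by (field; lra).
    apply int01_le_lincomb; auto; try (left; apply Rinv_0_lt_compat; auto).
    + intros c d _ _ _; apply Riemann_integrable_const.
    + apply int01_le_const; lra.
Qed.

Lemma Rpower_mul_div x z p : 0 < x -> 0 < z -> Rpower (x * z) p / z = Rpower x p * Rpower z (p - 1).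
Proof.
  intros Hx Hz. rewrite <- Rpower_mult_distr by auto.
  replace (Rpower z p) with (Rpower z (p - 1) * z); [field; lra |].
  rewrite <- (Rpower_1 z) at 2 by auto. rewrite <- Rpower_plus. f_equal; ring.
Qed.

Lemma power_tail_arith x X y Y z p C : 0 < x <= X -> 0 < y <= Y -> 0 < z -> 0 <= p -> 0 <= C ->
  (Rpower (x * z) p + Rpower (y * z) p * C) / z <= (Rpower X p + Rpower Y p * C) * Rpower z (p - 1).
Proof.
  intros Hx Hy Hz Hp HC.
  replace ((Rpower (x * z) p + Rpower (y * z) p * C) / z)
    with (Rpower (x * z) p / z + Rpower (y * z) p / z * C) by (field; lra).
  rewrite !Rpower_mul_div by lra.
  assert (Rpower x p <= Rpower X p) by (apply Rle_Rpower_l; lra).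
  assert (Rpower y p * C <= Rpower Y p * C) by (apply Rmult_le_compat_r, Rle_Rpower_l; lra).
  pose proof (Rpower_pos z (p - 1)). nra.
Qed.

Lemma Conclusion_power_tail Q (HQ : is_quantile Q) EW EW2
  (HEW : IsExp Q (fun w => w) EW) (HEW2 : IsExp Q (fun w => w ^ 2) EW2) (HEWpos : 0 < EW) tau :
  3 < tau < 5 -> PowerTail Q tau ->
  Conclusion Q EW (EW2 / EW) (arcsinh (1 / (EW2 / EW))) (fun c1 z => c1 * Rpower z (tau - 2)).
Proof.
  intros Ht HPT.
  pose proof (second_moment_pos Q HQ EW EW2 HEW HEW2 HEWpos) as HEW2pos.
  pose proof (betac_pos EW EW2 HEWpos HEW2pos) as Hbc.
  destruct (quantile_le_of_PowerTail Q tau HQ HPT ltac:(lra)) as (w0 & A0 & Hw0 & HA0 & HT).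
  set (g := 1 / (tau - 1)) in HT.
  assert (Hg : 1/4 < g < 1/2).
  { unfold g. split; [apply (Rmult_lt_reg_r (4 * (tau - 1))) | apply (Rmult_lt_reg_r (2 * (tau - 1)))];
      try lra; field_simplify; lra. }
  set (C := 1 / (1 - 2 * g) + 1 / (4 * g - 1)).
  assert (HC : 0 < C)
    by (unfold C; pose proof (Rdiv_lt_0_compat 1 (1 - 2 * g)); pose proof (Rdiv_lt_0_compat 1 (4 * g - 1)); lra).
  set (amax := alpha EW (arcsinh (1 / (EW2 / EW)) + 1)).
  assert (Ham : 0 < amax) by (apply alpha_pos; lra).
  set (K := Rpower (amax * w0) (tau - 1) + Rpower (amax * A0) (tau - 1) * C).
  assert (HK : 0 < K) by (pose proof (Rpower_pos (amax * w0) (tau - 1));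
                          pose proof (Rpower_pos (amax * A0) (tau - 1)); unfold K; nra).
  apply (Conclusion_of_correction_bound Q HQ EW EW2 HEW HEW2 HEWpos HEW2pos _ 1 (8 * K + 1)); [lra | lra |].
  intros beta B z Hb HB [Hz HZ].
  set (a := alpha EW beta).
  assert (Ha : 0 < a) by (apply alpha_pos; lra).
  assert (Haa : a <= amax) by (apply alpha_le; lra).
  exists ((Rpower (a * w0 * z) (tau - 1) + Rpower (a * A0 * z) (tau - 1) * C) / z). split.
  - assert (HM : (Rpower (a * w0 * z) (tau - 1) + Rpower (a * A0 * z) (tau - 1) * C) / z
                 <= K * Rpower z (tau - 2)).
    { unfold K. replace (tau - 2) with (tau - 1 - 1) by ring.
      apply power_tail_arith; try split; try apply Rmult_lt_0_compat; try apply Rmult_le_compat_r; lra. }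
    pose proof (Rpower_pos z (tau - 2)). nra.
  - apply (int01_le_correction_of_tail Q HQ a z w0 A0 g); auto; try lra.
    replace (tau - 1) with (1 / g) by (unfold g; field; lra).
    apply int01_le_tail_profile; auto. repeat apply Rmult_lt_0_compat; auto.
Qed.

Lemma sinh_sub_le x y : 0 <= x -> x <= y -> sinh y - sinh x <= exp y * (y - x).
Proof.
  intros Hx [Hxy | <-]; [| lra].
  destruct (MVT_cor2 sinh cosh x y Hxy (fun c _ => derivable_pt_lim_sinh c)) as [c [E Hc]].
  rewrite E. apply Rmult_le_compat_r; [lra |].
  pose proof (exp_le_compat (- c) c ltac:(lra)). pose proof (exp_le_compat c y ltac:(lra)).
  unfold cosh. lra.
Qed.

Lemma sinh_nu_sub_one_bounds nu beta eps : 0 < nu -> 0 < arcsinh (1 / nu) ->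
  arcsinh (1 / nu) <= beta <= arcsinh (1 / nu) + eps -> eps <= 1 ->
  0 <= sinh beta * nu - 1 <= exp (arcsinh (1 / nu) + 1) * eps * nu.
Proof.
  intros Hnu Hbc Hb Heps.
  replace (sinh beta * nu - 1) with ((sinh beta - sinh (arcsinh (1 / nu))) * nu)
    by (rewrite sinh_arcsinh; field; lra).
  split.
  - apply Rmult_le_pos; [pose proof (sinh_le _ beta (proj1 Hb)) |]; lra.
  - apply Rmult_le_compat_r; [lra |].
    apply Rle_trans with (exp beta * (beta - arcsinh (1 / nu))); [apply sinh_sub_le; lra |].
    pose proof (exp_pos beta).
    apply Rmult_le_compat; [lra | lra | apply exp_le_compat | ]; lra.
Qed.

Lemma gap_term_le a b q z0 : 0 <= a -> a <= b -> 0 <= q -> 0 <= z0 ->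
  a * q * tanh_gap (a * q * z0) <= b * q * tanh_gap (b * q * z0).
Proof.
  intros. apply Rmult_le_compat.
  - apply Rmult_le_pos; lra.
  - apply tanh_gap_nonneg. repeat apply Rmult_le_pos; lra.
  - apply Rmult_le_compat_r; lra.
  - apply tanh_gap_le. repeat apply Rmult_le_compat_r; lra.
Qed.

(* Near [(betac, 0)] the linearised equation [z = sinh(beta) nu z + O(B)]
   leaves no room for a solution [z > 1/2]: by [fixed_point_upper] it would
   have to pay a fixed positive concavity gap, while the linear terms only
   supply [eps * amax EW (exp (betac + 1) nu + 1)]. *)
Lemma fixed_point_le_half_near Q (HQ : is_quantile Q) EW EW2
  (HEW : IsExp Q (fun w => w) EW) (HEW2 : IsExp Q (fun w => w ^ 2) EW2) (HEWpos : 0 < EW)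
  (HEW2pos : 0 < EW2) u1 eps beta B z :
  let nu := EW2 / EW in
  let betac := arcsinh (1 / nu) in
  let ac := alpha EW betac in
  let amax := alpha EW (betac + 1) in
  0 < u1 < 1 -> 0 < Q u1 -> eps <= 1 ->
  eps * (amax * EW * (exp (betac + 1) * nu + 1)) <= (1 - u1) / 2 * (ac * Q u1 * tanh_gap (ac * Q u1 * (1/2))) / 2 ->
  betac <= beta <= betac + eps -> 0 < B < eps -> IsZstar Q EW beta B z -> z <= 1/2.
Proof.
  intros nu betac ac amax Hu1 Hq1 Heps1 Heps2 Hb HB [Hz HZ].
  pose proof (betac_pos EW EW2 HEWpos HEW2pos) as Hbc. fold nu betac in Hbc.
  assert (Hnu : 0 < nu) by (apply Rdiv_lt_0_compat; auto).
  assert (HD0 : 0 < (1 - u1) / 2 * (ac * Q u1 * tanh_gap (ac * Q u1 * (1/2)))).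
  { assert (Hac : 0 < ac) by (apply alpha_pos; auto).
    apply Rmult_lt_0_compat; [lra |]. apply Rmult_lt_0_compat; [apply Rmult_lt_0_compat; auto |].
    apply tanh_gap_pos. repeat apply Rmult_lt_0_compat; auto; lra. }
  set (a := alpha EW beta).
  assert (Ha : 0 <= a) by apply alpha_nonneg.
  assert (Haa : a <= amax) by (apply alpha_le; lra).
  apply Rnot_lt_le. intro Hzl.
  pose proof (fixed_point_upper Q EW EW2 a B z HQ HEW HEW2 Ha ltac:(lra) Hz HZ (1/2) u1
                ltac:(lra) ltac:(lra) Hu1) as K.
  assert (KD : (1 - u1) / 2 * (ac * Q u1 * tanh_gap (ac * Q u1 * (1/2)))
               <= (1 - u1) / 2 * (a * Q u1 * tanh_gap (a * Q u1 * (1 / 2))))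
    by (apply Rmult_le_compat_l; [lra | apply gap_term_le; [apply alpha_nonneg | apply alpha_le | |]; lra]).
  assert (KE : a * a * EW2 * z = sinh beta * nu * z).
  { unfold a. rewrite alpha_sq by (auto; left; apply sinh_pos; lra). unfold nu; field; lra. }
  pose proof (fixed_point_le Q EW a B z HQ HEW Ha HZ) as Kz.
  pose proof (sinh_nu_sub_one_bounds nu beta eps Hnu Hbc Hb Heps1) as Ks. fold betac in Ks.
  assert (z * (sinh beta * nu - 1) <= amax * EW * (exp (betac + 1) * eps * nu)).
  { assert (a * EW <= amax * EW) by (apply Rmult_le_compat_r; lra).
    apply Rmult_le_compat; lra. }
  assert (a * B * EW <= amax * eps * EW) by (apply Rmult_le_compat_r, Rmult_le_compat; lra).
  lra.
Qed.

Lemma fixed_point_le_half Q (HQ : is_quantile Q) EW EW2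
  (HEW : IsExp Q (fun w => w) EW) (HEW2 : IsExp Q (fun w => w ^ 2) EW2) (HEWpos : 0 < EW) :
  let nu := EW2 / EW in
  let betac := arcsinh (1 / nu) in
  exists eps, 0 < eps <= 1 /\ forall beta B z, betac <= beta <= betac + eps -> 0 < B < eps ->
    IsZstar Q EW beta B z -> z <= 1/2.
Proof.
  intros nu betac.
  pose proof (second_moment_pos Q HQ EW EW2 HEW HEW2 HEWpos) as HEW2pos.
  pose proof (betac_pos EW EW2 HEWpos HEW2pos) as Hbc. fold nu betac in Hbc.
  destruct (quantile_pos_somewhere Q EW HEW HEWpos) as (u1 & Hu1 & Hq1).
  set (ac := alpha EW betac). set (amax := alpha EW (betac + 1)).
  set (D0 := (1 - u1) / 2 * (ac * Q u1 * tanh_gap (ac * Q u1 * (1/2)))).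
  assert (HD0 : 0 < D0).
  { assert (Hac : 0 < ac) by (apply alpha_pos; auto).
    apply Rmult_lt_0_compat; [lra |]. apply Rmult_lt_0_compat; [apply Rmult_lt_0_compat; auto |].
    apply tanh_gap_pos. repeat apply Rmult_lt_0_compat; auto; lra. }
  set (Lc := amax * EW * (exp (betac + 1) * nu + 1)).
  assert (HLc : 0 < Lc).
  { assert (0 < amax) by (apply alpha_pos; lra).
    assert (0 < exp (betac + 1) * nu) by (apply Rmult_lt_0_compat; [apply exp_pos | apply Rdiv_lt_0_compat; lra]).
    unfold Lc; repeat apply Rmult_lt_0_compat; lra. }
  exists (Rmin 1 (D0 / (2 * Lc))). split.
  { split; [apply Rmin_glb_lt; [lra | apply Rdiv_lt_0_compat; lra] | apply Rmin_l]. }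
  intros beta B z Hb HB Hz.
  apply (fixed_point_le_half_near Q HQ EW EW2 HEW HEW2 HEWpos HEW2pos u1 (Rmin 1 (D0 / (2 * Lc)))
           beta B); auto; [apply Rmin_l |].
  apply Rle_trans with (D0 / (2 * Lc) * Lc); [apply Rmult_le_compat_r, Rmin_r; lra |].
  right. unfold D0, ac, betac, nu. field. lra.
Qed.

Lemma two_le_inv z : 0 < z <= 1/2 -> 2 <= 1 / z.
Proof.
  intros Hz. unfold Rdiv. rewrite Rmult_1_l.
  apply (Rmult_le_reg_r z); [lra |]. rewrite Rinv_l; lra.
Qed.

Lemma log_tail_arith x X y Y z : 0 < x <= X -> 1 <= y <= Y -> 0 < z <= 1/2 ->
  (Rpower (x * z) 4 + Rpower (y * z) 4 * (2 + Rmax 0 (- ln (Rpower (y * z) 4)))) / z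
  <= (2 * X ^ 4 + 8 * Y ^ 4) * (z ^ 3 * ln (1 / z)).
Proof.
  intros Hx Hy Hz.
  set (L := ln (1 / z)).
  assert (HL : 1/2 <= L).
  { pose proof ln_lt_2. enough (ln 2 <= L) by lra. apply ln_le, two_le_inv; lra. }
  assert (Hyz : - ln (Rpower (y * z) 4) <= 4 * L).
  { unfold L. rewrite ln_Rpower, ln_mult, ln_div, ln_1 by lra.
    assert (0 <= ln y) by (rewrite <- ln_1; apply ln_le; lra). lra. }
  set (R1 := Rmax 0 (- ln (Rpower (y * z) 4))) in *.
  assert (HR : 2 + R1 <= 8 * L) by (unfold R1; apply Rmax_case; lra).
  assert (E4 : forall t, 0 < t -> Rpower t 4 = t ^ 4)
    by (intros t Ht; rewrite <- Rpower_pow by auto; f_equal; simpl; ring).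
  rewrite !E4 by nra.
  replace (((x * z) ^ 4 + (y * z) ^ 4 * (2 + R1)) / z) with (z ^ 3 * (x ^ 4 + y ^ 4 * (2 + R1)))
    by (field; lra).
  assert (Hz3 : 0 < z ^ 3) by (apply pow_lt; lra).
  assert (Hx4 : 0 <= x ^ 4) by (apply pow_le; lra).
  assert (Hy4 : 0 <= y ^ 4) by (apply pow_le; lra).
  assert (x ^ 4 <= x ^ 4 * (2 * L)) by nra.
  assert (y ^ 4 * (2 + R1) <= y ^ 4 * (8 * L)) by (apply Rmult_le_compat_l; auto).
  assert (x ^ 4 <= X ^ 4) by (apply pow_incr; lra). assert (y ^ 4 <= Y ^ 4) by (apply pow_incr; lra).
  replace ((2 * X ^ 4 + 8 * Y ^ 4) * (z ^ 3 * L)) with (z ^ 3 * (X ^ 4 * (2 * L) + Y ^ 4 * (8 * L))) by ring.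
  apply Rmult_le_compat_l; nra.
Qed.

Lemma Conclusion_power_tail_log Q (HQ : is_quantile Q) EW EW2
  (HEW : IsExp Q (fun w => w) EW) (HEW2 : IsExp Q (fun w => w ^ 2) EW2) (HEWpos : 0 < EW) :
  PowerTail Q 5 ->
  Conclusion Q EW (EW2 / EW) (arcsinh (1 / (EW2 / EW))) (fun c1 z => c1 * z ^ 3 * ln (1 / z)).
Proof.
  intros HPT.
  pose proof (second_moment_pos Q HQ EW EW2 HEW HEW2 HEWpos) as HEW2pos.
  pose proof (betac_pos EW EW2 HEWpos HEW2pos) as Hbc.
  destruct (fixed_point_le_half Q HQ EW EW2 HEW HEW2 HEWpos) as (eps & Heps & Hsmall).
  destruct (quantile_le_of_PowerTail Q 5 HQ HPT ltac:(lra)) as (w0 & A0 & Hw0 & HA0 & HT).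
  replace (1 / (5 - 1)) with (1/4) in HT by field.
  set (ac := alpha EW (arcsinh (1 / (EW2 / EW)))).
  set (amax := alpha EW (arcsinh (1 / (EW2 / EW)) + 1)).
  assert (Hac : 0 < ac) by (apply alpha_pos; auto).
  assert (Hacm : ac <= amax) by (apply alpha_le; lra).
  (* Enlarging [A0] to [1 / ac] makes [a * A1 >= 1], so that [ln (a A1 z) >= ln z]. *)
  set (A1 := Rmax A0 (1 / ac)).
  assert (HA1 : 0 < A1) by (eapply Rlt_le_trans; [apply HA0 | apply Rmax_l]).
  pose proof (quantile_tail_bound_weaken Q w0 A0 A1 (1/4) (Rmax_l _ _) HT) as HT1.
  set (c1 := 8 * (2 * (amax * w0) ^ 4 + 8 * (amax * A1) ^ 4) + 1).
  assert (Hc1 : 0 < c1).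
  { assert (0 <= (amax * w0) ^ 4) by (apply pow_le; apply Rmult_le_pos; lra).
    assert (0 <= (amax * A1) ^ 4) by (apply pow_le; apply Rmult_le_pos; lra).
    unfold c1; lra. }
  apply (Conclusion_of_correction_bound Q HQ EW EW2 HEW HEW2 HEWpos HEW2pos _ eps c1); [lra | lra |].
  intros beta B z Hb HB Hzstar.
  pose proof (Hsmall beta B z Hb HB Hzstar) as Hzs. destruct Hzstar as [Hz HZ].
  set (a := alpha EW beta).
  assert (Ha : 0 < a) by (apply alpha_pos; lra).
  assert (Haa : a <= amax) by (apply alpha_le; lra).
  assert (HaA1 : 1 <= a * A1).
  { apply Rle_trans with (ac * (1 / ac)); [right; field; lra |].
    apply Rmult_le_compat; [lra | left; apply Rdiv_lt_0_compat; lra | apply alpha_le; lra | apply Rmax_r]. }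
  set (lam := Rpower (a * A1 * z) 4).
  exists ((Rpower (a * w0 * z) 4 + lam * (2 + Rmax 0 (- ln lam))) / z). split.
  - assert (HzL : 0 <= z ^ 3 * ln (1 / z)).
    { apply Rmult_le_pos; [apply pow_le; lra |].
      rewrite <- ln_1. apply ln_le; [lra |]. pose proof (two_le_inv z ltac:(lra)). lra. }
    pose proof (log_tail_arith (a * w0) (amax * w0) (a * A1) (amax * A1) z
      ltac:(split; [apply Rmult_lt_0_compat | apply Rmult_le_compat_r]; lra)
      ltac:(split; [| apply Rmult_le_compat_r]; lra) ltac:(lra)).
    unfold c1, lam. nra.
  - apply (int01_le_correction_of_tail Q HQ a z w0 A1 (1/4)); auto; try lra.
    apply int01_le_tail_profile_log. repeat apply Rmult_lt_0_compat; auto.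
Qed.

Theorem mainTheorem8 (Q : R -> R) (HQ : is_quantile Q)
  (EW EW2 : R)
  (HEW : IsExp Q (fun w => w) EW) (HEW2 : IsExp Q (fun w => w ^ 2) EW2)
  (HEWpos : 0 < EW) :
  let nu := EW2 / EW in
  let betac := arcsinh (1 / nu) in
  ((exists m4, IsExp Q (fun w => w ^ 4) m4) ->
     Conclusion Q EW nu betac (fun c1 z => c1 * Rpower z 3)) /\
  (forall tau, 3 < tau < 5 -> PowerTail Q tau ->
     Conclusion Q EW nu betac (fun c1 z => c1 * Rpower z (tau - 2))) /\
  (PowerTail Q 5 ->
     Conclusion Q EW nu betac (fun c1 z => c1 * z ^ 3 * ln (1 / z))).
Proof.
  intros nu betac. split; [| split].
  - intros [m4 H4]. exact (Conclusion_fourth_moment Q HQ EW EW2 HEW HEW2 HEWpos m4 H4).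
  - exact (Conclusion_power_tail Q HQ EW EW2 HEW HEW2 HEWpos).
  - exact (Conclusion_power_tail_log Q HQ EW EW2 HEW HEW2 HEWpos).
Qed.
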